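(* Let $(X,d)$ be a compact doubling metric space with $\operatorname{diam}(X,d)=1/2$, and let $\mathcal S$ be a hyperbolic filling of $(X,d)$ with vertical and horizontal parameters $a,\lambda$ satisfying $a\ge\lambda\ge6$. Let $\rho:\mathcal S\to(0,1)$ be a weight function satisfying the hypotheses (H1), (H2), (H3) and (H4), the latter with exponent $p>0$. Then there exists a metric $\Theta_\rho\in\mathcal J_p(X,d)$ such that $\dim_{\mathrm A}(X,\Theta_\rho)\le p$.
   Context: Hyperbolic filling: $(X,d)$ compact with $\operatorname{diam}=1/2$, $a,\lambda>1$. Fix an increasing sequence $X_0\subset X_1\subset\cdots$, each $X_n$ a maximal $a^{-n}$-separated subset of $X$ (so $X_0=\{x_0\}$). Let $\mathcal S_n=\{(x,n):x\in X_n\}$, $\mathcal S=\bigcup_n\mathcal S_n$, $\pi_1(x,n)=x$, $\pi_2(x,n)=n$, $v_0=(x_0,0)$, $B_v=B(\pi_1(v),a^{-\pi_2(v)})$. Each $(x,n)$, $n\ge1$, has a fixed parent $(y,n-1)$ with $d(x,y)=\min_{z\in X_{n-1}}d(x,z)$ (and is a child of it); descendants are obtained by iterating the child relation, $\mathcal D_n(v)$ is the set of descendants of $v$ in $\mathcal S_n$. The genealogy $g(v)$ of $v\in\mathcal S_k$ is $(v_0,\dots,v_k=v)$ with $v_i$ the parent of $v_{i+1}$. The graph $(\mathcal S,D_2)$ has edges between each vertex and its parent, and horizontal edges between distinct $(x,n),(y,n)$ with $B(x,\lambda a^{-n})\cap B(y,\lambda a^{-n})\neq\emptyset$; $D_2$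 is its graph distance. A path is a finite sequence of vertices, consecutive ones joined by an edge. Weights: for $\rho:\mathcal S\to(0,\infty)$ let $\pi(v)=\prod_{w\in g(v)}\rho(w)$ and, for a path $\gamma$, $L_\rho(\gamma)=\sum_{v\in\gamma}\pi(v)$. For distinct $x,y\in X$ let $\tilde n$ be the largest integer such that $\{x,y\}\subset B(\tilde z,2a^{-\tilde n})$ for some $(\tilde z,\tilde n)\in\mathcal S$, let $c(x,y)=\{(\tilde z,\tilde n)\in\mathcal S:\{x,y\}\subset B(\tilde z,2a^{-\tilde n})\}$ and $\pi(c(x,y))=\max_{w\in c(x,y)}\pi(w)$. $\Gamma_n(x,y)$ is the set of paths $(v_1,\dots,v_k)$ in $(\mathcal S,D_2)$ with $\pi_2(v_1)=\pi_2(v_k)=n$, $x\in B_{v_1}$, $y\in B_{v_k}$. Hypotheses: (H1) there are $0<\eta_-\le\eta_+<1$ with $\eta_-\le\rho\le\eta_+$ on $\mathcal S$. (H2) there is $K_0\ge1$ with $\pi(v)\le K_0\pi(w)$ whenever $v,w$ share a horizontal edge. (H3) there is $K_1\ge1$ such that for all distinct $x,y\in X$ there is $n_0\ge1$ with $L_\rho(\gamma)\ge K_1^{-1}\pi(c(x,y))$ for all $n\ge n_0$ and $\gamma\in\Gamma_n(x,y)$. (H4) there is $p>0$ with $\sum_{w\in\mathcal D_n(v)}\pi(w)^p\le\pi(v)^p$ for all $v\in\mathcal S_m$, $n>m$. $(X,d)$ is doubling if there is $N$ such that every ball of radius $r$ is covered by $N$ balls of radius $r/2$. Assouad dimension: $\dim_{\mathrm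 A}(X,\theta)=\inf\{\beta>0:\exists C,\ N_r(B(x,R))\le C(R/r)^\beta\ \forall x,\,0<r<R\}$, $N_r$ the minimal number of $r$-balls in a cover. $\mathcal J_p(X,d)$ is the set of metrics $\theta$ on $X$ such that $\theta(x,a)/\theta(x,b)\le\eta(d(x,a)/d(x,b))$ for all $x,a,b$, $x\ne b$, with $\eta(t)=C(t^\alpha\vee t^{1/\alpha})$ for some $C,\alpha\ge1$. *)

From Stdlib Require Import Reals List.
From Stdlib Require Import ClassicalEpsilon.
From Coquelicot Require Import Rbar Lub.
Import ListNotations.
Open Scope R_scope.

Definition is_metric {X : Type} (d : X -> X -> R) : Prop :=
  (forall x y, 0 <= d x y) /\
  (forall x y, d x y = 0 <-> x = y) /\
  (forall x y, d x y = d y x) /\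
  (forall x y z, d x z <= d x y + d y z).

Definition mball {X : Type} (d : X -> X -> R) (x : X) (r : R) : X -> Prop :=
  fun y => d x y < r.

Definition mopen_set {X : Type} (d : X -> X -> R) (U : X -> Prop) : Prop :=
  forall x, U x -> exists r, 0 < r /\ forall y, mball d x r y -> U y.

Definition mcompact {X : Type} (d : X -> X -> R) : Prop :=
  forall (I : Type) (U : I -> X -> Prop),
    (forall i, mopen_set d (U i)) -> (forall x, exists i, U i x) ->
    exists l : list I, forall x, exists i, In i l /\ U i x.

Definition doubling {X : Type} (d : X -> X -> R) : Prop :=
  exists N : nat, forall (x : X) (r : R), 0 < r ->
    exists l : list X, (length l <= N)%nat /\
      forall y, mball d x r y -> exists c, In c l /\ mball d c (r / 2) y.

Definition diam_eq {X : Type} (d : X -> X -> R) (D : R) : Prop :=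
  is_lub (fun t => exists x y, t = d x y) D.

Definition separated {X : Type} (d : X -> X -> R) (eps : R) (A : X -> Prop) : Prop :=
  forall x y, A x -> A y -> x <> y -> eps <= d x y.

Definition maximal_separated {X : Type} (d : X -> X -> R) (eps : R) (A : X -> Prop) : Prop :=
  separated d eps A /\
  forall B : X -> Prop, separated d eps B -> (forall x, A x -> B x) -> (forall x, B x -> A x).

Definition apow (a : R) (n : nat) : R := / (a ^ n).

(* Vertices are pairs (x,n); (x,n) is in S iff x is in X_n. *)
Definition V (X : Type) : Type := (X * nat)%type.

Definition inS {X : Type} (Xn : nat -> X -> Prop) (v : V X) : Prop := Xn (snd v) (fst v).

(* [par x n] (n >= 1) is the first coordinate of the parent (par x n, n-1) of (x,n). *)
Definition hyperbolic_filling {X : Type} (d : X -> X -> R) (a : R)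
    (Xn : nat -> X -> Prop) (x0 : X) (par : X -> nat -> X) : Prop :=
  (forall n x, Xn n x -> Xn (S n) x) /\
  (forall n, maximal_separated d (apow a n) (Xn n)) /\
  (forall x, Xn 0%nat x <-> x = x0) /\
  (forall n x, Xn (S n) x ->
     Xn n (par x (S n)) /\ forall z, Xn n z -> d x (par x (S n)) <= d x z).

Definition parentV {X : Type} (par : X -> nat -> X) (v : V X) : V X :=
  match snd v with
  | 0%nat => v
  | S m => (par (fst v) (S m), m)
  end.

Definition anc {X : Type} (par : X -> nat -> X) (v : V X) (j : nat) : V X :=
  Nat.iter j (parentV par) v.

Fixpoint prodR (f : nat -> R) (n : nat) : R :=
  match n with
  | 0%nat => f 0%nat
  | S m => prodR f m * f (S m)
  end.

(* pi(v) = product of rho over the genealogy g(v) = (v_0, ..., v_k = v) *)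
Definition piw {X : Type} (par : X -> nat -> X) (rho : V X -> R) (v : V X) : R :=
  prodR (fun j => rho (anc par v j)) (snd v).

Definition desc {X : Type} (Xn : nat -> X -> Prop) (par : X -> nat -> X)
    (v : V X) (n : nat) (w : V X) : Prop :=
  inS Xn w /\ snd w = n /\ exists j, (1 <= j)%nat /\ anc par w j = v.

Definition hedge {X : Type} (d : X -> X -> R) (a lam : R) (Xn : nat -> X -> Prop)
    (u v : V X) : Prop :=
  inS Xn u /\ inS Xn v /\ snd u = snd v /\ u <> v /\
  exists z, mball d (fst u) (lam * apow a (snd u)) z /\
            mball d (fst v) (lam * apow a (snd v)) z.

Definition vedge {X : Type} (Xn : nat -> X -> Prop) (par : X -> nat -> X) (u v : V X) : Prop :=
  inS Xn u /\ inS Xn v /\ (1 <= snd u)%nat /\ v = parentV par u.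

Definition edge {X : Type} (d : X -> X -> R) (a lam : R) (Xn : nat -> X -> Prop)
    (par : X -> nat -> X) (u v : V X) : Prop :=
  vedge Xn par u v \/ vedge Xn par v u \/ hedge d a lam Xn u v.

Fixpoint is_chain {X : Type} (e : V X -> V X -> Prop) (l : list (V X)) : Prop :=
  match l with
  | [] => True
  | u :: t => match t with
              | [] => True
              | v :: _ => e u v /\ is_chain e t
              end
  end.

Definition is_path {X : Type} (d : X -> X -> R) (a lam : R) (Xn : nat -> X -> Prop)
    (par : X -> nat -> X) (g : list (V X)) : Prop :=
  g <> [] /\ Forall (inS Xn) g /\ is_chain (edge d a lam Xn par) g.

Definition Bv {X : Type} (d : X -> X -> R) (a : R) (v : V X) : X -> Prop :=
  mball d (fst v) (apow a (snd v)).

Definition Gamma {X : Type} (d : X -> X -> R) (a lam : R) (Xn : nat -> X -> Prop)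
    (par : X -> nat -> X) (n : nat) (x y : X) (g : list (V X)) : Prop :=
  is_path d a lam Xn par g /\
  exists u, hd_error g = Some u /\
    snd u = n /\ snd (last g u) = n /\ Bv d a u x /\ Bv d a (last g u) y.

Definition Lrho {X : Type} (par : X -> nat -> X) (rho : V X -> R) (g : list (V X)) : R :=
  fold_right (fun v s => piw par rho v + s) 0 g.

Definition both_in {X : Type} (d : X -> X -> R) (a : R) (x y : X) (w : V X) : Prop :=
  mball d (fst w) (2 * apow a (snd w)) x /\ mball d (fst w) (2 * apow a (snd w)) y.

Definition top_level {X : Type} (d : X -> X -> R) (a : R) (Xn : nat -> X -> Prop)
    (x y : X) (n : nat) : Prop :=
  (exists z, inS Xn (z, n) /\ both_in d a x y (z, n)) /\
  (forall w, inS Xn w -> both_in d a x y w -> (snd w <= n)%nat).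

Definition in_c {X : Type} (d : X -> X -> R) (a : R) (Xn : nat -> X -> Prop)
    (x y : X) (w : V X) : Prop :=
  inS Xn w /\ top_level d a Xn x y (snd w) /\ both_in d a x y w.

Definition is_max_of (P : R -> Prop) (m : R) : Prop :=
  P m /\ forall r, P r -> r <= m.

Definition pi_c {X : Type} (d : X -> X -> R) (a : R) (Xn : nat -> X -> Prop)
    (par : X -> nat -> X) (rho : V X -> R) (x y : X) : R :=
  epsilon (inhabits 0)
    (is_max_of (fun r => exists w, in_c d a Xn x y w /\ r = piw par rho w)).

Definition H1 {X : Type} (Xn : nat -> X -> Prop) (rho : V X -> R) : Prop :=
  exists em ep, 0 < em /\ em <= ep /\ ep < 1 /\
    forall v, inS Xn v -> em <= rho v /\ rho v <= ep.

Definition H2 {X : Type} (d : X -> X -> R) (a lam : R) (Xn : nat -> X -> Prop)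
    (par : X -> nat -> X) (rho : V X -> R) : Prop :=
  exists K0, 1 <= K0 /\
    forall v w, hedge d a lam Xn v w -> piw par rho v <= K0 * piw par rho w.

Definition H3 {X : Type} (d : X -> X -> R) (a lam : R) (Xn : nat -> X -> Prop)
    (par : X -> nat -> X) (rho : V X -> R) : Prop :=
  exists K1, 1 <= K1 /\
    forall x y : X, x <> y -> exists n0 : nat, (1 <= n0)%nat /\
      forall n g, (n0 <= n)%nat -> Gamma d a lam Xn par n x y g ->
        / K1 * pi_c d a Xn par rho x y <= Lrho par rho g.

(* sum over the (finite) set D_n(v): every finite family of distinct descendants *)
Definition H4 {X : Type} (Xn : nat -> X -> Prop) (par : X -> nat -> X)
    (rho : V X -> R) (p : R) : Prop :=
  forall v n, inS Xn v -> (snd v < n)%nat ->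
    forall l : list (V X), NoDup l -> Forall (desc Xn par v n) l ->
      fold_right (fun w s => Rpower (piw par rho w) p + s) 0 l
        <= Rpower (piw par rho v) p.

(* t^s with the convention 0^s = 0 *)
Definition rpow (t s : R) : R := if Req_EM_T t 0 then 0 else Rpower t s.

Definition etaf (C alpha t : R) : R := C * Rmax (rpow t alpha) (rpow t (/ alpha)).

Definition in_J {X : Type} (d theta : X -> X -> R) : Prop :=
  exists C alpha, 1 <= C /\ 1 <= alpha /\
    forall x a b : X, x <> b -> theta x a / theta x b <= etaf C alpha (d x a / d x b).

(* beta is admissible: N_r(B(x,R)) <= C (R/r)^beta for all x, 0<r<R,
   where N_r(A) <= t means A admits a cover by at most t balls of radius r *)
Definition assouad_adm {X : Type} (theta : X -> X -> R) (beta : R) : Prop :=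
  0 < beta /\ exists C, forall (x : X) (r Rad : R), 0 < r -> r < Rad ->
    exists l : list X, INR (length l) <= C * Rpower (Rad / r) beta /\
      forall y, mball theta x Rad y -> exists c, In c l /\ mball theta c r y.

Definition assouad_dim {X : Type} (theta : X -> X -> R) : Rbar :=
  Glb_Rbar (assouad_adm theta).

(* The metric is Theta(x, y) = limsup_n theta_n(x, y), where theta_n(x, y) is the least
   L_rho-length of a path of Gamma_n(x, y).  Climbing the genealogies of two level-n vertices
   near x and y up to the level of c(x, y), where (H2) relates them, costs a geometric series
   bounded by a multiple of pi(c(x, y)), and (H3) gives the reverse bound, so
   Theta(x, y) is comparable to pi(c(x, y)).  Since pi varies by bounded factors between
   neighbours and by factors in [eta_-, eta_+] between generations, the ratio of
   pi(c(x, a)) and pi(c(x, b)) is controlled by a power of d(x, a) / d(x, b): Theta is a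
   power quasisymmetric change of d.  For the Assouad bound, a Theta-ball of radius R is
   covered by the points of the first vertices whose weight drops below a multiple of r,
   found below boundedly many top vertices of weight comparable to R; on each level (H4)
   counts them by (R/r)^p, and only O(log(R/r)) levels occur. *)

From Stdlib Require Import Reals List Lra Lia ZArith FinFun Classical ClassicalEpsilon.
From Coquelicot Require Import Rbar Lub Hierarchy Lim_seq.
Import ListNotations.
Open Scope R_scope.

Lemma pow_le_one x n : 0 <= x <= 1 -> x ^ n <= 1.
Proof. intros Hx. rewrite <- (pow1 n). apply pow_incr; lra. Qed.

Lemma pow_le_pow_contravar x m n : 0 <= x <= 1 -> (m <= n)%nat -> x ^ n <= x ^ m.
Proof.
  intros Hx Hmn. replace n with (m + (n - m))%nat by lia. rewrite pow_add.
  pose proof (pow_le x m ltac:(lra)). pose proof (pow_le_one x (n - m) Hx). nra.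
Qed.

Lemma pow_eventually_lt x eps : 0 <= x < 1 -> 0 < eps -> exists n, x ^ n < eps.
Proof.
  intros Hx He. destruct (pow_lt_1_zero x ltac:(rewrite Rabs_right; lra) eps He) as [N HN].
  exists N. specialize (HN N (le_n N)). rewrite Rabs_right in HN; [exact HN|].
  apply Rle_ge, pow_le; lra.
Qed.

Lemma INR_le_pow2 k : INR k <= 2 ^ k.
Proof.
  induction k as [|k IH]; [simpl; lra|]. rewrite S_INR. simpl.
  pose proof (pow_R1_Rle 2 k ltac:(lra)). lra.
Qed.

Lemma halvings_below r s : 0 < r -> 0 < s -> exists k, r / 2 ^ k <= s.
Proof.
  intros Hr Hs. destruct (INR_unbounded (r / s)) as [k Hk]. exists k.
  pose proof (INR_le_pow2 k). assert (H2k : 0 < 2 ^ k) by (apply pow_lt; lra).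
  apply (Rmult_le_reg_r (2 ^ k)); [lra|]. unfold Rdiv in *.
  rewrite Rmult_assoc, Rinv_l, Rmult_1_r by lra.
  apply (Rmult_lt_compat_r s) in Hk; [|lra].
  rewrite Rmult_assoc, Rinv_l, Rmult_1_r in Hk by lra. nra.
Qed.

Lemma nat_ceil x : 0 < x -> exists L : nat, x < INR L <= x + 1.
Proof.
  intros Hx. destruct (archimed x) as [H1 H2].
  assert (Hz : (0 < up x)%Z) by (apply lt_IZR; simpl; lra).
  exists (Z.to_nat (up x)). rewrite INR_IZR_INZ, Z2Nat.id by lia. lra.
Qed.

Lemma nat_pred_max (P : nat -> Prop) B :
  (exists n, P n) -> (forall n, P n -> (n <= B)%nat) ->
  exists n, P n /\ forall m, P m -> (m <= n)%nat.
Proof.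
  revert P. induction B as [|B IH]; intros P [n Hn] Hb.
  - exists n. split; [exact Hn|]. intros m Hm. pose proof (Hb m Hm). pose proof (Hb n Hn). lia.
  - destruct (classic (P (S B))) as [HB|HB].
    + exists (S B). split; [exact HB|]. exact Hb.
    + apply IH; [exists n; exact Hn|]. intros m Hm.
      pose proof (Hb m Hm). destruct (Nat.eq_dec m (S B)); [subst; contradiction|lia].
Qed.

Lemma exp_le_compat x y : x <= y -> exp x <= exp y.
Proof. intros [H| ->]; [now apply Rlt_le, exp_increasing|lra]. Qed.

Lemma ln_le_id z : 0 < z -> ln z <= z.
Proof. intros Hz. pose proof (exp_ineq1_le (ln z)). rewrite exp_ln in H; lra. Qed.

Lemma Rpower_ge_1 u s : 1 <= u -> 0 <= s -> 1 <= Rpower u s.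
Proof. intros Hu Hs. rewrite <- (Rpower_O u) by lra. apply Rle_Rpower; lra. Qed.

Lemma Rpower_div x y s : 0 < x -> 0 < y -> Rpower (x / y) s = Rpower x s / Rpower y s.
Proof.
  intros Hx Hy. unfold Rdiv. rewrite <- Rpower_mult_distr by (auto; apply Rinv_0_lt_compat; auto).
  f_equal. unfold Rpower. rewrite ln_Rinv by exact Hy. rewrite <- exp_Ropp. f_equal. ring.
Qed.

Lemma pow_le_Rpower_mul c b s k B t : 0 < c -> 0 < b -> 0 <= s -> 0 < B -> 0 < t ->
  c <= Rpower b s -> b ^ k <= B * t -> c ^ k <= Rpower B s * Rpower t s.
Proof.
  intros Hc Hb Hs HB Ht Hcb Hbk.
  assert (Hck : c ^ k <= Rpower (b ^ k) s).
  { rewrite <- (Rpower_pow k b), Rpower_mult, Rmult_comm, <- Rpower_mult by lra.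
    rewrite Rpower_pow by (unfold Rpower; apply exp_pos). apply pow_incr; lra. }
  apply (Rle_trans _ _ _ Hck). rewrite Rpower_mult_distr by lra.
  apply Rle_Rpower_l; [exact Hs|split; [apply pow_lt; lra|exact Hbk]].
Qed.

Lemma pow_mul_lt_1 q c L : 0 < q < 1 -> 0 < c -> ln c / - ln q < INR L -> q ^ L * c < 1.
Proof.
  intros Hq Hc HL. assert (Hlnq : ln q < 0) by (rewrite <- ln_1; apply ln_increasing; lra).
  rewrite <- (Rpower_pow L q) by lra. unfold Rpower. rewrite <- (exp_ln c) by exact Hc.
  rewrite <- exp_plus, <- exp_0. apply exp_increasing.
  apply (Rmult_lt_compat_r (- ln q)) in HL; [|lra]. unfold Rdiv in HL.
  rewrite Rmult_assoc, Rinv_l, Rmult_1_r in HL by lra. lra.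
Qed.

(* A count growing like [L u^s] with [L ~ log u] is absorbed by any power [u^(s + eps)]. *)
Lemma log_times_power_le c lnq eps s P u (L : nat) :
  1 <= c -> 0 < lnq -> 0 < eps -> 0 <= s -> 0 <= P -> 1 < u -> INR L <= ln (c * u) / lnq + 1 ->
  1 + INR L * (P * Rpower u s) <= (1 + (1 + ln c / lnq + / (eps * lnq)) * P) * Rpower u (s + eps).
Proof.
  intros Hc Hq He Hs HP Hu HL.
  set (U := Rpower u s). set (W := Rpower u eps).
  assert (HU : 1 <= U) by (apply Rpower_ge_1; lra).
  assert (HW : 1 <= W) by (apply Rpower_ge_1; lra).
  assert (Hlnc : 0 <= ln c)
    by (rewrite <- ln_1; destruct Hc as [Hc| <-]; [apply Rlt_le, ln_increasing|]; lra).
  assert (Hlnu : ln u <= W / eps).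
  { pose proof (ln_le_id W ltac:(lra)) as Hl.
    assert (E : ln W = eps * ln u) by (unfold W; apply ln_Rpower). rewrite E in Hl.
    apply (Rmult_le_reg_l eps); [lra|]. unfold Rdiv.
    rewrite <- Rmult_assoc, (Rmult_comm eps W), Rmult_assoc, Rinv_r; lra. }
  assert (HLb : INR L <= 1 + ln c / lnq + / (eps * lnq) * W).
  { rewrite ln_mult in HL by lra.
    assert (ln u / lnq <= / (eps * lnq) * W).
    { replace (/ (eps * lnq) * W) with (W / eps / lnq) by (field; lra).
      unfold Rdiv. apply Rmult_le_compat_r; [apply Rlt_le, Rinv_0_lt_compat; lra|exact Hlnu]. }
    unfold Rdiv in *. rewrite Rmult_plus_distr_r in HL. lra. }
  rewrite Rpower_plus. fold U W.
  set (A := 1 + ln c / lnq). set (B := / (eps * lnq)).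
  assert (HA : 1 <= A)
    by (unfold A; assert (0 <= ln c / lnq) by (apply Rmult_le_pos; [lra|];
        apply Rlt_le, Rinv_0_lt_compat; lra); lra).
  assert (HB : 0 < B) by (unfold B; apply Rinv_0_lt_compat; nra).
  assert (INR L * (P * U) <= (A + B * W) * (P * U)) by (apply Rmult_le_compat_r; [nra|exact HLb]).
  assert (A * (P * U) <= A * (P * U) * W)
    by (assert (0 <= A * (P * U)) by (apply Rmult_le_pos; nra); nra).
  nra.
Qed.

Lemma prodR_ext f g n : (forall j, f j = g j) -> prodR f n = prodR g n.
Proof. intros H. induction n as [|n IH]; simpl; rewrite ?IH, H; reflexivity. Qed.

Lemma prodR_succ f k : prodR f (S k) = f 0%nat * prodR (fun j => f (S j)) k.
Proof.
  induction k as [|k IH]; [simpl; ring|].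
  change (prodR f (S k) * f (S (S k)) = f 0%nat * (prodR (fun j => f (S j)) k * f (S (S k)))).
  rewrite IH. ring.
Qed.

Lemma finite_pred_argmax {T : Type} (f : T -> R) (L : list T) (Q : T -> Prop) :
  (forall w, Q w -> In w L) -> (exists w, Q w) ->
  exists w0, Q w0 /\ forall w, Q w -> f w <= f w0.
Proof.
  revert Q. induction L as [|w1 L IH]; intros Q HQ Hex.
  - destruct Hex as [w Hw]. destruct (HQ w Hw).
  - destruct (classic (exists w, Q w /\ w <> w1)) as [Hx|Hx].
    + destruct (IH (fun w => Q w /\ w <> w1)) as [w0 [[Hw0 _] Hmax]]; [|exact Hx|].
      { intros w [Hw Hne]. destruct (HQ w Hw); [congruence|assumption]. }
      destruct (classic (Q w1 /\ f w0 <= f w1)) as [[Hq1 Hle]|Hn].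
      * exists w1. split; [exact Hq1|]. intros w Hw.
        destruct (classic (w = w1)) as [->|Hne]; [lra|]. pose proof (Hmax w (conj Hw Hne)). lra.
      * exists w0. split; [exact Hw0|]. intros w Hw.
        destruct (classic (w = w1)) as [->|Hne]; [|apply Hmax; tauto].
        apply Rnot_lt_le. intros Hl. apply Hn. split; [exact Hw|lra].
    + destruct Hex as [w Hw]. exists w. split; [exact Hw|]. intros w' Hw'.
      assert (w = w1) by (apply NNPP; intro; apply Hx; eauto).
      assert (w' = w1) by (apply NNPP; intro; apply Hx; eauto). subst; lra.
Qed.

Lemma nodup_select {T : Type} (P : T -> Prop) (E : list T) :
  exists L, NoDup L /\ forall z, In z L <-> In z E /\ P z.
Proof.
  induction E as [|e E [L [HN HL]]].
  - exists []. split; [constructor|]. intros z; simpl; tauto.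
  - destruct (classic (P e /\ ~ In e L)) as [[Pe Ne]|Hn].
    + exists (e :: L). split; [now constructor|]. intros z. simpl. rewrite HL.
      split; [intros [<-|[? ?]]; auto|intros [[<-|?] ?]; auto].
    + exists L. split; [exact HN|]. intros z. rewrite HL. simpl.
      split; [tauto|]. intros [[<-|Hz] Pz]; [|tauto].
      apply HL. apply NNPP. intros Hni. apply Hn. split; assumption.
Qed.

Lemma count_le_sum {T : Type} (l : list T) (f : T -> R) c :
  (forall w, In w l -> c <= f w) -> INR (length l) * c <= fold_right (fun w s => f w + s) 0 l.
Proof.
  induction l as [|w l IH]; intros H; [simpl; lra|].
  simpl length. rewrite S_INR. simpl.
  pose proof (H w (or_introl eq_refl)). pose proof (IH (fun v Hv => H v (or_intror Hv))). lra.
Qed.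

Lemma list_union_bound {A B : Type} (T : list A) (P : A -> B -> Prop) (n : R) : 0 <= n ->
  (forall t, In t T -> exists l, INR (length l) <= n /\ forall b, P t b -> In b l) ->
  exists l, INR (length l) <= INR (length T) * n /\ forall t b, In t T -> P t b -> In b l.
Proof.
  intros Hn. induction T as [|t T IH]; intros HT.
  - exists []. split; [simpl; lra|]. intros t b [].
  - destruct (HT t (or_introl eq_refl)) as [l1 [Hl1 Hc1]].
    destruct IH as [l [Hl Hc]]; [intros t' Ht'; apply HT; now right|].
    exists (l1 ++ l). split; [rewrite length_app, plus_INR; simpl length; rewrite S_INR; lra|].
    intros t' b [<-|Ht'] Hb; apply in_or_app; [left; now apply Hc1|right; now apply (Hc t')].
Qed.

Lemma last_nonnil_default {T : Type} (l : list T) d1 d2 : l <> [] -> last l d1 = last l d2.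
Proof.
  induction l as [|x [|y l] IH]; intros H; [congruence|reflexivity|].
  apply IH. discriminate.
Qed.

Lemma in_last_nonnil {T : Type} (l : list T) dflt : l <> [] -> In (last l dflt) l.
Proof.
  induction l as [|x [|y l] IH]; intros H; [congruence|now left|].
  change (In (last (y :: l) dflt) (x :: y :: l)). right. apply IH. discriminate.
Qed.

Lemma last_app_nonnil {T : Type} (l1 l2 : list T) dflt :
  l2 <> [] -> last (l1 ++ l2) dflt = last l2 dflt.
Proof. intros H. rewrite (app_removelast_last dflt H), app_assoc, !last_last. reflexivity. Qed.

Section Chains.
Context {Y : Type} (e : V Y -> V Y -> Prop).

Lemma is_chain_cons u t :
  is_chain e (u :: t) <-> is_chain e t /\ forall v, hd_error t = Some v -> e u v.
Proof.
  destruct t as [|v t]; simpl; split.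
  - intros _. split; [exact I|discriminate].
  - intros _. exact I.
  - intros [Huv Ht]. split; [exact Ht|]. intros w [= <-]. exact Huv.
  - intros [Ht Hu]. split; [apply Hu; reflexivity|exact Ht].
Qed.

Lemma is_chain_join l1 v w l2 :
  is_chain e (l1 ++ [v]) -> is_chain e (w :: l2) -> e v w -> is_chain e (l1 ++ v :: w :: l2).
Proof.
  induction l1 as [|u l1 IH]; intros H1 H2 Hvw; [split; assumption|].
  rewrite <- !app_comm_cons in *. apply is_chain_cons in H1 as [H1 Hu].
  apply is_chain_cons. split; [now apply IH|].
  intros z Hz. apply Hu. destruct l1; exact Hz.
Qed.

Lemma is_chain_rev : (forall u v, e u v -> e v u) -> forall l, is_chain e l -> is_chain e (rev l).
Proof.
  intros Hsym l. induction l as [|u l IH]; [trivial|]. destruct l as [|v t]; [trivial|].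
  intros [Huv Ht]. change (is_chain e ((rev t ++ [v]) ++ [u])). rewrite <- app_assoc.
  apply is_chain_join; [exact (IH Ht)|exact I|now apply Hsym].
Qed.

End Chains.

Lemma real_Glb_Rbar_le (E : R -> Prop) t :
  E t -> (forall u, E u -> 0 <= u) -> real (Glb_Rbar E) <= t.
Proof.
  intros Ht H0. destruct (Glb_Rbar_correct E) as [Hlb Hglb].
  pose proof (Hlb t Ht). pose proof (Hglb (Finite 0) H0).
  destruct (Glb_Rbar E); simpl in *; try contradiction; lra.
Qed.

Lemma real_Glb_Rbar_ge (E : R -> Prop) m :
  (exists t, E t) -> (forall u, E u -> m <= u) -> m <= real (Glb_Rbar E).
Proof.
  intros [t Ht] Hm. destruct (Glb_Rbar_correct E) as [Hlb Hglb].
  pose proof (Hlb t Ht). pose proof (Hglb (Finite m) Hm).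
  destruct (Glb_Rbar E); simpl in *; try contradiction; lra.
Qed.

Lemma LimSup_seq_ext u v : (forall n, u n = v n) -> LimSup_seq u = LimSup_seq v.
Proof.
  intros H. apply is_LimSup_seq_unique, (is_LimSup_seq_ext v u).
  - intros n. now rewrite H.
  - exact (proj2_sig (ex_LimSup_seq v)).
Qed.

Section BoundedLimSup.
Variables (u : nat -> R) (B : R).
Hypothesis u_bounded : forall n, 0 <= u n <= B.

Lemma LimSup_seq_bounded : LimSup_seq u = Finite (real (LimSup_seq u)).
Proof.
  assert (H0 := LimSup_le (fun _ => 0) u (ex_intro _ 0%nat (fun n _ => proj1 (u_bounded n)))).
  assert (HB := LimSup_le u (fun _ => B) (ex_intro _ 0%nat (fun n _ => proj2 (u_bounded n)))).
  rewrite LimSup_seq_const in H0, HB. destruct (LimSup_seq u); easy.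
Qed.

Lemma LimSup_seq_le_eventually M : eventually (fun n => u n <= M) -> real (LimSup_seq u) <= M.
Proof.
  intros H. pose proof (LimSup_le u (fun _ => M) H) as HM.
  rewrite LimSup_seq_const, LimSup_seq_bounded in HM. exact HM.
Qed.

Lemma LimSup_seq_ge_eventually m : eventually (fun n => m <= u n) -> m <= real (LimSup_seq u).
Proof.
  intros H. pose proof (LimSup_le (fun _ => m) u H) as Hm.
  rewrite LimSup_seq_const, LimSup_seq_bounded in Hm. exact Hm.
Qed.

Lemma LimSup_seq_eventually_lt eps :
  0 < eps -> eventually (fun n => u n < real (LimSup_seq u) + eps).
Proof.
  intros He. pose proof (proj2_sig (ex_LimSup_seq u)) as Hu. fold (LimSup_seq u) in Hu.
  rewrite LimSup_seq_bounded in Hu.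
  exact (proj2 (Hu (mkposreal eps He))).
Qed.

End BoundedLimSup.

Lemma LimSup_seq_subadditive u v w B :
  (forall n, 0 <= u n <= B) -> (forall n, 0 <= v n <= B) -> (forall n, 0 <= w n <= B) ->
  (forall n, u n <= v n + w n) ->
  real (LimSup_seq u) <= real (LimSup_seq v) + real (LimSup_seq w).
Proof.
  intros Hu Hv Hw Huvw. apply Rle_plus_epsilon. intros eps He.
  destruct (LimSup_seq_eventually_lt v B Hv (eps / 2) ltac:(lra)) as [N1 HN1].
  destruct (LimSup_seq_eventually_lt w B Hw (eps / 2) ltac:(lra)) as [N2 HN2].
  apply (LimSup_seq_le_eventually u B Hu). exists (Nat.max N1 N2). intros n Hn.
  specialize (HN1 n ltac:(lia)). specialize (HN2 n ltac:(lia)). specialize (Huvw n). lra.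
Qed.

Section Metric.
Context {X : Type} {d : X -> X -> R} (Hd : is_metric d).

Lemma metric_nonneg x y : 0 <= d x y.
Proof. apply Hd. Qed.

Lemma metric_sym x y : d x y = d y x.
Proof. apply Hd. Qed.

Lemma metric_triangle x y z : d x z <= d x y + d y z.
Proof. apply Hd. Qed.

Lemma metric_self x : d x x = 0.
Proof. apply Hd. reflexivity. Qed.

Lemma metric_pos x y : x <> y -> 0 < d x y.
Proof.
  intros Hxy. destruct (Rle_lt_or_eq_dec 0 (d x y) (metric_nonneg x y)) as [H|H]; [exact H|].
  exfalso. apply Hxy, Hd. now symmetry.
Qed.

End Metric.

Section Doubling.
Context {X : Type} {d : X -> X -> R} (Hd : is_metric d) (Nd : nat).
Hypothesis d_doubling : forall x r, 0 < r -> exists l : list X, (length l <= Nd)%nat /\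
  forall y, mball d x r y -> exists c, In c l /\ mball d c (r / 2) y.

Lemma doubling_refine (l : list X) r : 0 < r ->
  exists L : list X, (length L <= Nd * length l)%nat /\
    forall c y, In c l -> d c y < r -> exists c', In c' L /\ d c' y < r / 2.
Proof.
  intros Hr. induction l as [|c1 l IH].
  - exists []. split; [simpl; lia|]. intros c y [].
  - destruct IH as [L [HL Hc]]. destruct (d_doubling c1 r Hr) as [l1 [Hl1 Hc1]].
    exists (l1 ++ L). split; [rewrite length_app; simpl; lia|].
    intros c y [<-|Hin] Hcy.
    + destruct (Hc1 y Hcy) as [c' [Hc' Hc'y]]. exists c'. split; [apply in_or_app; auto|exact Hc'y].
    + destruct (Hc c y Hin Hcy) as [c' [Hc' Hc'y]]. exists c'.
    split; [apply in_or_app; auto|exact Hc'y].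
Qed.

Lemma doubling_ball_cover k c r : 0 < r ->
  exists l : list X, (length l <= Nd ^ k)%nat /\
    forall y, d c y < r -> exists c', In c' l /\ d c' y < r / 2 ^ k.
Proof.
  intros Hr. induction k as [|k IH].
  - exists [c]. split; [simpl; lia|]. intros y Hy. exists c. split; [left; reflexivity|simpl; lra].
  - destruct IH as [l [Hl Hc]].
    destruct (doubling_refine l (r / 2 ^ k)) as [L [HL HcL]].
    { apply Rdiv_lt_0_compat; [exact Hr|apply pow_lt; lra]. }
    exists L. split; [rewrite Nat.pow_succ_r'; nia|].
    intros y Hy. destruct (Hc y Hy) as [c' [Hc' Hc'y]].
    destruct (HcL c' y Hc' Hc'y) as [c'' [H1 H2]].
    exists c''. split; [exact H1|]. replace (r / 2 ^ S k) with (r / 2 ^ k / 2); [exact H2|].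
    simpl. field. pose proof (pow_lt 2 k); lra.
Qed.

Lemma separated_select (A : X -> Prop) s : separated d s A ->
  forall l : list X, exists L : list X, (length L <= length l)%nat /\
    forall z, A z -> (exists c, In c l /\ d c z < s / 2) -> In z L.
Proof.
  intros Hs l. induction l as [|c l IH].
  - exists []. split; [simpl; lia|]. intros z _ [c [[] _]].
  - destruct IH as [L [HL HLz]].
    destruct (classic (exists z, A z /\ d c z < s / 2)) as [[z0 [Hz0 Hd0]]|Hn].
    + exists (z0 :: L). split; [simpl; lia|].
      intros z Hz [c' [[<-|Hc'] Hc'z]]; [left|right; apply HLz; eauto].
      apply NNPP. intros Hne. pose proof (Hs z0 z Hz0 Hz Hne).
      pose proof (metric_triangle Hd z0 c z). rewrite (metric_sym Hd z0 c) in *. lra.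
    + exists L. split; [simpl; lia|]. intros z Hz [c' [[<-|Hc'] Hc'z]].
      * exfalso. apply Hn. eauto.
      * apply HLz; eauto.
Qed.

Lemma separated_ball_list (A : X -> Prop) s c r k :
  separated d s A -> 0 < r -> r / 2 ^ k <= s / 2 ->
  exists L : list X, (length L <= Nd ^ k)%nat /\ forall z, A z -> d c z < r -> In z L.
Proof.
  intros Hs Hr Hk. destruct (doubling_ball_cover k c r Hr) as [l [Hl Hc]].
  destruct (separated_select A s Hs l) as [L [HL HLz]]. exists L. split; [lia|].
  intros z Hz Hcz. apply HLz; [exact Hz|]. destruct (Hc z Hcz) as [c' [? ?]].
  exists c'. split; [assumption|lra].
Qed.

End Doubling.

Lemma assouad_dim_le {Y : Type} (theta : Y -> Y -> R) s :
  (forall beta, s < beta -> assouad_adm theta beta) -> Rbar_le (assouad_dim theta) (Finite s).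
Proof.
  intros Hadm. unfold assouad_dim. destruct (Glb_Rbar_correct (assouad_adm theta)) as [Hlb _].
  destruct (Glb_Rbar (assouad_adm theta)) as [l| |]; simpl;
    [|exact (Hlb _ (Hadm (s + 1) ltac:(lra)))|exact I].
  apply Rnot_lt_le. intros Hlt. specialize (Hlb _ (Hadm ((l + s) / 2) ltac:(lra))). simpl in Hlb.
  lra.
Qed.

Section Filling.
Variables (X : Type) (d : X -> X -> R) (a lam : R).
Variables (Xn : nat -> X -> Prop) (x0 : X) (par : X -> nat -> X).
Variables (rho : V X -> R) (p em ep K0 K1 : R) (Nd : nat).
(* (H1)-(H4) appear unpacked as [rho_bounds], [pi_hedge], [pi_c_paths] and
   [descendant_packing], with [em], [ep], [K0], [K1] for eta_-, eta_+, K_0, K_1. *)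
Hypothesis d_metric : is_metric d.
Hypothesis d_doubling : forall x r, 0 < r -> exists l : list X, (length l <= Nd)%nat /\
  forall y, mball d x r y -> exists c, In c l /\ mball d c (r / 2) y.
Hypothesis d_le_half : forall x y, d x y <= 1 / 2.
Hypothesis lam_ge_6 : 6 <= lam.
Hypothesis lam_le_a : lam <= a.
Hypothesis filling : hyperbolic_filling d a Xn x0 par.
Hypothesis em_pos : 0 < em.
Hypothesis em_le_ep : em <= ep.
Hypothesis ep_lt_1 : ep < 1.
Hypothesis rho_bounds : forall v, inS Xn v -> em <= rho v <= ep.
Hypothesis K0_ge_1 : 1 <= K0.
Hypothesis pi_hedge : forall v w, hedge d a lam Xn v w -> piw par rho v <= K0 * piw par rho w.
Hypothesis K1_ge_1 : 1 <= K1.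
Hypothesis pi_c_paths : forall x y : X, x <> y -> exists n0 : nat, (1 <= n0)%nat /\
  forall n g, (n0 <= n)%nat -> Gamma d a lam Xn par n x y g ->
    / K1 * pi_c d a Xn par rho x y <= Lrho par rho g.
Hypothesis p_pos : 0 < p.
Hypothesis descendant_packing : H4 Xn par rho p.

Notation pi := (piw par rho).
Notation inSv := (inS Xn).
Notation edge := (edge d a lam Xn par).
Notation Gamma := (Gamma d a lam Xn par).
Notation Lrho := (Lrho par rho).

Let d_sym := metric_sym d_metric.
Let d_tri := metric_triangle d_metric.
Let d_self := metric_self d_metric.

(** * Levels, ancestors and weights *)

Lemma apow_pos n : 0 < apow a n.
Proof. apply Rinv_0_lt_compat, pow_lt; lra. Qed.

Lemma apow_O : apow a 0 = 1.
Proof. unfold apow; simpl; lra. Qed.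

Lemma apow_S n : apow a (S n) = apow a n / a.
Proof. unfold apow, Rdiv. simpl. rewrite Rinv_mult. ring. Qed.

Lemma apow_add n k : apow a (n + k) = apow a n * apow a k.
Proof. unfold apow. rewrite pow_add, Rinv_mult. reflexivity. Qed.

Lemma apow_le_contravar m n : (m <= n)%nat -> apow a n <= apow a m.
Proof.
  intros Hmn. unfold apow. apply Rinv_le_contravar; [apply pow_lt; lra|].
  apply Rle_pow; [lra|exact Hmn].
Qed.

Lemma apow_S_le n : apow a (S n) <= apow a n / 6.
Proof.
  rewrite apow_S. pose proof (apow_pos n). unfold Rdiv.
  apply Rmult_le_compat_l; [lra|]. apply Rinv_le_contravar; lra.
Qed.

Lemma apow_sub_le m j : apow a (m - j) <= a ^ j * apow a m.
Proof.
  unfold apow. assert (Hm : 0 < a ^ m) by (apply pow_lt; lra).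
  assert (Hmj : 0 < a ^ (m - j)) by (apply pow_lt; lra).
  assert (Hj : 0 < a ^ j) by (apply pow_lt; lra).
  assert (H1 : a ^ m <= a ^ (m - j) * a ^ j) by (rewrite <- pow_add; apply Rle_pow; [lra|lia]).
  apply (Rmult_le_reg_l (a ^ m * a ^ (m - j))); [nra|].
  replace (a ^ m * a ^ (m - j) * / a ^ (m - j)) with (a ^ m) by (field; lra).
  replace (a ^ m * a ^ (m - j) * (a ^ j * / a ^ m)) with (a ^ (m - j) * a ^ j) by (field; lra).
  exact H1.
Qed.

Lemma Xn_separated n : separated d (apow a n) (Xn n).
Proof. exact (proj1 (proj1 (proj2 filling) n)). Qed.

Lemma Xn_O x : Xn 0 x <-> x = x0.
Proof. exact (proj1 (proj2 (proj2 filling)) x). Qed.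

Lemma parent_spec n x : Xn (S n) x ->
  Xn n (par x (S n)) /\ forall z, Xn n z -> d x (par x (S n)) <= d x z.
Proof. exact (proj2 (proj2 (proj2 filling)) n x). Qed.

(* Maximality of the separated set [Xn n] makes it an [a^-n]-net. *)
Lemma Xn_net n y : exists z, Xn n z /\ d z y < apow a n.
Proof.
  destruct (classic (exists z, Xn n z /\ d z y < apow a n)) as [E|NE]; [exact E|].
  exfalso. destruct (proj1 (proj2 filling) n) as [Hsep Hmax].
  assert (Hy : Xn n y).
  { apply (Hmax (fun w => Xn n w \/ w = y)); [|intros; now left|now right].
    intros u w [Hu| ->] [Hw| ->] Hne; [apply Hsep; assumption| | |congruence];
      apply Rnot_lt_le; intros Hl; apply NE.
    - exists u. split; assumption.
    - exists w. rewrite d_sym. split; assumption. }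
  apply NE. exists y. rewrite d_self. split; [exact Hy|apply apow_pos].
Qed.

Lemma snd_parentV v : snd (parentV par v) = pred (snd v).
Proof. destruct v as [x [|k]]; reflexivity. Qed.

Lemma inS_parentV v : inSv v -> inSv (parentV par v).
Proof. destruct v as [x [|k]]; [trivial|]. intros H. apply (parent_spec k x H). Qed.

Lemma anc_S_r v i : anc par v (S i) = anc par (parentV par v) i.
Proof. apply Nat.iter_succ_r. Qed.

Lemma anc_anc v i j : anc par (anc par v i) j = anc par v (j + i).
Proof. unfold anc. rewrite Nat.iter_add. reflexivity. Qed.

Lemma snd_anc v i : snd (anc par v i) = (snd v - i)%nat.
Proof.
  induction i as [|i IH]; [simpl; lia|].
  change (snd (parentV par (anc par v i)) = (snd v - S i)%nat). rewrite snd_parentV, IH. lia.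
Qed.

Lemma inS_anc v i : inSv v -> inSv (anc par v i).
Proof. intros H. induction i as [|i IH]; [exact H|]. apply inS_parentV, IH. Qed.

Lemma root_inS : inSv (x0, 0%nat).
Proof. apply Xn_O. reflexivity. Qed.

Lemma anc_root v : inSv v -> anc par v (snd v) = (x0, 0%nat).
Proof.
  intros Hv. pose proof (inS_anc v (snd v) Hv) as H. pose proof (snd_anc v (snd v)) as Hs.
  destruct (anc par v (snd v)) as [z k]. unfold inS in H. simpl in *.
  rewrite Nat.sub_diag in Hs. subst k. apply Xn_O in H. now subst.
Qed.

Lemma parent_dist v : inSv v -> (1 <= snd v)%nat ->
  d (fst v) (fst (parentV par v)) < apow a (pred (snd v)).
Proof.
  destruct v as [x [|k]]; simpl; [lia|]. intros H _.
  destruct (parent_spec k x H) as [_ Hmin]. destruct (Xn_net k x) as [z [Hz Hzx]].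
  specialize (Hmin z Hz). rewrite d_sym in Hzx. lra.
Qed.

(* The distances to successive ancestors form a geometric series of ratio [1/a <= 1/6]. *)
Lemma anc_dist i : forall j v, inSv v -> snd v = (j + i)%nat ->
  d (fst v) (fst (anc par v i)) <= 6 / 5 * apow a j.
Proof.
  induction i as [|i IH]; intros j v Hv Hs.
  - simpl. rewrite d_self. pose proof (apow_pos j). lra.
  - change (anc par v (S i)) with (parentV par (anc par v i)).
    pose proof (IH (S j) v Hv ltac:(lia)) as Hi.
    assert (Hsa : snd (anc par v i) = S j) by (rewrite snd_anc; lia).
    pose proof (parent_dist (anc par v i) (inS_anc v i Hv) ltac:(lia)) as Hp.
    rewrite Hsa in Hp. simpl in Hp.
    pose proof (d_tri (fst v) (fst (anc par v i)) (fst (parentV par (anc par v i)))).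
    pose proof (apow_S_le j). lra.
Qed.

Lemma pi_parent v : (1 <= snd v)%nat -> pi v = pi (parentV par v) * rho v.
Proof.
  intros H. unfold piw. rewrite snd_parentV. destruct v as [x [|k]]; cbn [snd pred] in *; [lia|].
  rewrite prodR_succ, Rmult_comm. f_equal. apply prodR_ext. intros j. now rewrite anc_S_r.
Qed.

Lemma pi_root : pi (x0, 0%nat) = rho (x0, 0%nat).
Proof. reflexivity. Qed.

Lemma pi_pos v : inSv v -> 0 < pi v.
Proof.
  remember (snd v) as k eqn:Hk. revert v Hk. induction k as [|k IH]; intros v Hk Hv;
    destruct (rho_bounds v Hv).
  - unfold piw. rewrite <- Hk. simpl. lra.
  - rewrite pi_parent by lia. apply Rmult_lt_0_compat; [|lra].
    apply IH; [rewrite snd_parentV; lia|apply inS_parentV, Hv].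
Qed.

Lemma pi_anc_bounds i v : inSv v -> (i <= snd v)%nat ->
  em ^ i * pi (anc par v i) <= pi v <= ep ^ i * pi (anc par v i).
Proof.
  intros Hv. induction i as [|i IH]; intros Hi; [change (anc par v 0) with v; rewrite pow_O; lra|].
  specialize (IH ltac:(lia)).
  assert (Hs : (1 <= snd (anc par v i))%nat) by (rewrite snd_anc; lia).
  rewrite (pi_parent _ Hs) in IH.
  change (anc par v (S i)) with (parentV par (anc par v i)).
  set (P := pi (parentV par (anc par v i))) in *.
  destruct (rho_bounds _ (inS_anc v i Hv)).
  assert (0 <= em ^ i * P)
    by (apply Rmult_le_pos; [apply pow_le; lra|apply Rlt_le, pi_pos, inS_parentV, inS_anc, Hv]).
  assert (0 <= ep ^ i * P)
    by (apply Rmult_le_pos; [apply pow_le; lra|apply Rlt_le, pi_pos, inS_parentV, inS_anc, Hv]).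
  rewrite <- !tech_pow_Rmult. split; nra.
Qed.

Lemma pi_le_ep_pow v : inSv v -> pi v <= ep ^ (snd v).
Proof.
  intros Hv. pose proof (pi_anc_bounds (snd v) v Hv (le_n _)) as [_ H].
  rewrite anc_root, pi_root in H by exact Hv. destruct (rho_bounds _ root_inS).
  pose proof (pow_le ep (snd v) ltac:(lra)). nra.
Qed.

(** * Neighbours and paths *)

Lemma hedge_sym u v : hedge d a lam Xn u v -> hedge d a lam Xn v u.
Proof. intros (Hu & Hv & Hs & Hne & z & Hzu & Hzv). repeat split; auto. exists z; auto. Qed.

Lemma edge_sym u v : edge u v -> edge v u.
Proof. intros [H|[H|H]]; [right; left|left|right; right; apply hedge_sym]; exact H. Qed.

Lemma close_eq_or_hedge v w : inSv v -> inSv w -> snd v = snd w ->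
  d (fst v) (fst w) < lam * apow a (snd v) -> v = w \/ hedge d a lam Xn v w.
Proof.
  intros Hv Hw Hs Hvw. destruct (classic (v = w)) as [E|NE]; [now left|right].
  repeat split; auto. exists (fst w). split; [exact Hvw|]. unfold mball. rewrite d_self.
  pose proof (apow_pos (snd w)). nra.
Qed.

Lemma pi_le_close v w : inSv v -> inSv w -> snd v = snd w ->
  d (fst v) (fst w) < lam * apow a (snd v) -> pi v <= K0 * pi w.
Proof.
  intros Hv Hw Hs Hvw.
  destruct (close_eq_or_hedge v w Hv Hw Hs Hvw) as [<-|H]; [|now apply pi_hedge].
  pose proof (pi_pos v Hv). nra.
Qed.

(* Compare [v] and [w] through their ancestors at level [j], which are neighbours. *)
Lemma pi_compare v w j : inSv v -> inSv w -> (j <= snd v)%nat -> (j <= snd w)%nat ->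
  d (fst v) (fst w) < 18 / 5 * apow a j ->
  em ^ (snd w - j) * pi v <= K0 * ep ^ (snd v - j) * pi w.
Proof.
  intros Hv Hw Hjv Hjw Hvw.
  set (A := anc par v (snd v - j)). set (B := anc par w (snd w - j)).
  assert (HA : inSv A) by apply inS_anc, Hv.
  assert (HB : inSv B) by apply inS_anc, Hw.
  assert (sA : snd A = j) by (unfold A; rewrite snd_anc; lia).
  assert (sB : snd B = j) by (unfold B; rewrite snd_anc; lia).
  pose proof (anc_dist (snd v - j) j v Hv ltac:(lia)) as DA.
  pose proof (anc_dist (snd w - j) j w Hw ltac:(lia)) as DB.
  assert (HAB : pi A <= K0 * pi B).
  { apply pi_le_close; [exact HA|exact HB|congruence|]. rewrite sA.
    pose proof (d_tri (fst A) (fst v) (fst B)). pose proof (d_tri (fst v) (fst w) (fst B)).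
    rewrite (d_sym (fst A) (fst v)) in *. fold A B in DA, DB.
    assert (6 * apow a j <= lam * apow a j)
      by (apply Rmult_le_compat_r; [apply Rlt_le, apow_pos|lra]).
    lra. }
  destruct (pi_anc_bounds (snd v - j) v Hv ltac:(lia)) as [_ Hv'].
  destruct (pi_anc_bounds (snd w - j) w Hw ltac:(lia)) as [Hw' _].
  fold A in Hv'. fold B in Hw'.
  pose proof (pow_le ep (snd v - j) ltac:(lra)). pose proof (pow_le em (snd w - j) ltac:(lra)).
  pose proof (pi_pos A HA). pose proof (pi_pos B HB).
  apply Rle_trans with (em ^ (snd w - j) * (ep ^ (snd v - j) * (K0 * pi B))).
  - apply Rmult_le_compat_l; [lra|]. apply (Rle_trans _ _ _ Hv'). apply Rmult_le_compat_l; lra.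
  - apply Rle_trans with (K0 * ep ^ (snd v - j) * (em ^ (snd w - j) * pi B)); [lra|].
    apply Rmult_le_compat_l; [nra|exact Hw'].
Qed.

Lemma Lrho_app g1 g2 : Lrho (g1 ++ g2) = Lrho g1 + Lrho g2.
Proof. induction g1 as [|v g1 IH]; [simpl; ring|]. unfold Lrho in *. simpl. rewrite IH. ring. Qed.

Lemma Lrho_rev g : Lrho (rev g) = Lrho g.
Proof. induction g as [|v g IH]; [reflexivity|]. simpl. rewrite Lrho_app, IH. unfold Lrho; simpl.
ring. Qed.

Lemma Lrho_nonneg g : Forall inSv g -> 0 <= Lrho g.
Proof.
  induction 1 as [|v g Hv _ IH]; unfold Lrho in *; simpl; [lra|]. pose proof (pi_pos v Hv). lra.
Qed.

Definition walk (u v : V X) (g : list (V X)) : Prop :=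
  is_path d a lam Xn par g /\ hd_error g = Some u /\ last g u = v.

Lemma Gamma_walk n x y g : Gamma n x y g <->
  exists u v, walk u v g /\ snd u = n /\ snd v = n /\ Bv d a u x /\ Bv d a v y.
Proof.
  split.
  - intros [Hp (u & Hu & H)]. exists u, (last g u). unfold walk. tauto.
  - intros (u & v & (Hp & Hu & <-) & H). split; [exact Hp|]. exists u. tauto.
Qed.

Lemma walk_single u : inSv u -> walk u u [u].
Proof. intros Hu. repeat split; [discriminate|now constructor]. Qed.

Lemma walk_ends_inS u v g : walk u v g -> inSv u /\ inSv v.
Proof.
  intros [[Hne [Hin _]] [Hhd Hl]]. rewrite Forall_forall in Hin. split; apply Hin.
  - destruct g; [discriminate|]. injection Hhd as ->. now left.
  - rewrite <- Hl. now apply in_last_nonnil.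
Qed.

Lemma walk_rev u v g : walk u v g -> walk v u (rev g).
Proof.
  intros [[Hne [Hin Hch]] [Hhd Hl]]. split; [split; [|split]|split].
  - intros E. apply Hne. rewrite <- (rev_involutive g), E. reflexivity.
  - now apply Forall_rev.
  - apply is_chain_rev; [exact edge_sym|exact Hch].
  - rewrite (app_removelast_last u Hne) at 1. rewrite rev_app_distr. simpl. now rewrite Hl.
  - destruct g as [|w t]; [discriminate|]. injection Hhd as ->. apply last_last.
Qed.

Lemma walk_app u v w z g1 g2 : walk u v g1 -> walk w z g2 -> edge v w -> walk u z (g1 ++ g2).
Proof.
  intros [[Hne1 [Hin1 Hch1]] [Hhd1 Hl1]] [[Hne2 [Hin2 Hch2]] [Hhd2 Hl2]] Hvw.
  destruct g2 as [|w' t2]; [congruence|]. injection Hhd2 as ->.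
  split; [split; [|split]|split].
  - destruct g1; [congruence|discriminate].
  - apply Forall_app; split; assumption.
  - rewrite (app_removelast_last u Hne1) in Hch1 |- *. rewrite Hl1 in Hch1 |- *.
    rewrite <- app_assoc. apply is_chain_join; assumption.
  - destruct g1; [congruence|exact Hhd1].
  - rewrite last_app_nonnil by discriminate. rewrite <- Hl2. apply last_nonnil_default.
  discriminate.
Qed.

Lemma walk_behead v w t z : walk v z (v :: w :: t) -> walk w z (w :: t) /\ edge v w.
Proof.
  intros [[_ [Hin [Hvw Hch]]] [_ Hl]]. split; [|exact Hvw].
  split; [split; [discriminate|split; [exact (Forall_inv_tail Hin)|exact Hch]]|split; [reflexivity|]].
  rewrite <- Hl. change (last (w :: t) w = last (w :: t) v). apply last_nonnil_default.
  discriminate.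
Qed.

(* If the two walks already meet, the repeated vertex is dropped. *)
Lemma walk_glue u v w z g1 g2 : walk u v g1 -> walk w z g2 -> v = w \/ edge v w ->
  exists g, walk u z g /\ Lrho g <= Lrho g1 + Lrho g2.
Proof.
  intros H1 H2 [<-|Hvw].
  2:{ exists (g1 ++ g2). split; [now apply (walk_app u v w z)|rewrite Lrho_app; lra]. }
  destruct (walk_ends_inS _ _ _ H2) as [Hv _]. pose proof (pi_pos v Hv).
  assert (Hg2 : exists t, g2 = v :: t).
  { destruct H2 as [_ [Hhd _]]. destruct g2 as [|v' t]; [discriminate|].
    injection Hhd as ->. now exists t. }
  destruct Hg2 as [[|w t] ->].
  - exists g1. destruct H2 as [_ [_ Hl2]]. simpl in Hl2. subst z. split; [exact H1|].
    change (Lrho [v]) with (pi v + 0). lra.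
  - destruct (walk_behead v w t z H2) as [Hw Hvw]. exists (g1 ++ w :: t).
    split; [now apply (walk_app u v w z)|]. rewrite Lrho_app.
    change (Lrho (v :: w :: t)) with (pi v + Lrho (w :: t)). lra.
Qed.

Definition up_path (u : V X) (k : nat) : list (V X) := map (anc par u) (seq 0 (S k)).

Lemma walk_up_path u k : inSv u -> (k <= snd u)%nat -> walk u (anc par u k) (up_path u k).
Proof.
  intros Hu. induction k as [|k IH]; intros Hk; [exact (walk_single u Hu)|].
  unfold up_path. rewrite seq_S, map_app.
  apply (walk_app _ (anc par u k) (anc par u (S k))); [apply IH; lia|apply walk_single, inS_anc, Hu|].
  left. repeat split; [apply inS_anc, Hu|apply inS_anc, Hu|rewrite snd_anc; lia].
Qed.

Lemma Lrho_up_path u k : inSv u -> (k <= snd u)%nat ->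
  Lrho (up_path u k) <= pi (anc par u k) / (1 - ep).
Proof.
  intros Hu. induction k as [|k IH]; intros Hk.
  - change (pi u + 0 <= pi u / (1 - ep)). rewrite Rplus_0_r. unfold Rdiv.
    rewrite <- (Rmult_1_r (pi u)) at 1. pose proof (pi_pos u Hu).
    apply Rmult_le_compat_l; [lra|]. rewrite <- Rinv_1. apply Rinv_le_contravar; lra.
  - unfold up_path. rewrite seq_S, map_app. fold (up_path u k). rewrite Lrho_app.
    specialize (IH ltac:(lia)).
    destruct (pi_anc_bounds 1 (anc par u k) (inS_anc u k Hu) ltac:(rewrite snd_anc; lia)) as [_ H1].
    rewrite anc_anc, pow_1 in H1. simpl (1 + k)%nat in H1.
    change (Lrho (map (anc par u) [(0 + S k)%nat])) with (pi (anc par u (S k)) + 0).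
    assert (pi (anc par u k) / (1 - ep) <= ep * pi (anc par u (S k)) / (1 - ep)).
    { unfold Rdiv. apply Rmult_le_compat_r; [apply Rlt_le, Rinv_0_lt_compat; lra|exact H1]. }
    assert (ep * pi (anc par u (S k)) / (1 - ep) + pi (anc par u (S k)) =
      pi (anc par u (S k)) / (1 - ep)) by (field; lra).
    lra.
Qed.

Lemma Gamma_via n x y u u' k : inSv u -> inSv u' -> snd u = n -> snd u' = n ->
  Bv d a u x -> Bv d a u' y -> (k <= n)%nat ->
  anc par u k = anc par u' k \/ edge (anc par u k) (anc par u' k) ->
  exists g, Gamma n x y g /\ Lrho g <= (pi (anc par u k) + pi (anc par u' k)) / (1 - ep).
Proof.
  intros Hu Hu' Hsu Hsu' Hx Hy Hk Hjoin.
  destruct (walk_glue u (anc par u k) (anc par u' k) u' (up_path u k) (rev (up_path u' k)))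
    as [g [Hg HL]];
    [apply walk_up_path; [exact Hu|lia]|apply walk_rev, walk_up_path; [exact Hu'|lia]|exact Hjoin|].
  exists g. split; [apply Gamma_walk; exists u, u'; tauto|].
  rewrite Lrho_rev in HL. pose proof (Lrho_up_path u k Hu ltac:(lia)).
  pose proof (Lrho_up_path u' k Hu' ltac:(lia)).
  unfold Rdiv in *. rewrite Rmult_plus_distr_r. lra.
Qed.

Lemma Gamma_rev n x y g : Gamma n x y g -> Gamma n y x (rev g).
Proof.
  rewrite !Gamma_walk. intros (u & v & Hw & H). exists v, u. split; [now apply walk_rev|tauto].
Qed.

Lemma Gamma_concat n x y z g1 g2 : Gamma n x y g1 -> Gamma n y z g2 ->
  exists g, Gamma n x z g /\ Lrho g <= Lrho g1 + Lrho g2.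
Proof.
  rewrite !Gamma_walk.
  intros (u1 & v1 & W1 & Hu1 & Hv1 & Bx & By1) (u2 & v2 & W2 & Hu2 & Hv2 & By2 & Bz).
  destruct (walk_glue u1 v1 u2 v2 g1 g2 W1 W2) as [g [Hg HL]].
  - destruct (walk_ends_inS _ _ _ W1) as [_ Hv1S]. destruct (walk_ends_inS _ _ _ W2) as [Hu2S _].
    destruct (close_eq_or_hedge v1 u2 Hv1S Hu2S ltac:(congruence)) as [E|E];
      [|now left|right; right; right; exact E].
    unfold Bv, mball in By1, By2. rewrite Hv1 in *. rewrite Hu2 in By2.
    pose proof (d_tri (fst v1) y (fst u2)) as Htri. rewrite (d_sym y (fst u2)) in Htri.
    assert (2 * apow a n <= lam * apow a n)
      by (apply Rmult_le_compat_r; [apply Rlt_le, apow_pos|lra]).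
    lra.
  - exists g. split; [apply Gamma_walk; exists u1, v2; tauto|exact HL].
Qed.

(** * The metric Theta *)

Definition theta_n (n : nat) (x y : X) : R :=
  real (Glb_Rbar (fun t => exists g, Gamma n x y g /\ t = Lrho g)).

Lemma Gamma_inS n x y g : Gamma n x y g -> Forall inSv g.
Proof. intros [[_ [H _]] _]. exact H. Qed.

Lemma net_vertex n y : exists u, inSv u /\ snd u = n /\ Bv d a u y.
Proof. destruct (Xn_net n y) as [z [Hz Hzy]]. exists (z, n).
split; [exact Hz|split; [reflexivity|exact Hzy]]. Qed.

Lemma Gamma_exists n x y : exists g, Gamma n x y g /\ Lrho g <= 2 / (1 - ep).
Proof.
  destruct (net_vertex n x) as (u & Hu & Hsu & Hx).
  destruct (net_vertex n y) as (u' & Hu' & Hsu' & Hy).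
  assert (E : anc par u n = (x0, 0%nat)) by (rewrite <- Hsu; apply anc_root, Hu).
  assert (E' : anc par u' n = (x0, 0%nat)) by (rewrite <- Hsu'; apply anc_root, Hu').
  destruct (Gamma_via n x y u u' n Hu Hu' Hsu Hsu' Hx Hy (le_n n)) as [g [Hg HL]]; [left; congruence|].
  exists g. split; [exact Hg|]. rewrite E, E', pi_root in HL. destruct (rho_bounds _ root_inS).
  apply (Rle_trans _ _ _ HL). unfold Rdiv.
  apply Rmult_le_compat_r; [apply Rlt_le, Rinv_0_lt_compat|]; lra.
Qed.

Lemma theta_n_le n x y g : Gamma n x y g -> theta_n n x y <= Lrho g.
Proof.
  intros Hg. apply real_Glb_Rbar_le; [now exists g|].
  intros t [g' [Hg' ->]]. exact (Lrho_nonneg g' (Gamma_inS _ _ _ _ Hg')).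
Qed.

Lemma theta_n_ge n x y m : (forall g, Gamma n x y g -> m <= Lrho g) -> m <= theta_n n x y.
Proof.
  intros H. apply real_Glb_Rbar_ge; [|intros t [g [Hg ->]]; now apply H].
  destruct (Gamma_exists n x y) as [g [Hg _]]. now exists (Lrho g), g.
Qed.

Lemma theta_n_bounds n x y : 0 <= theta_n n x y <= 2 / (1 - ep).
Proof.
  split; [apply theta_n_ge; intros g Hg; exact (Lrho_nonneg g (Gamma_inS _ _ _ _ Hg))|].
  destruct (Gamma_exists n x y) as [g [Hg HL]]. pose proof (theta_n_le n x y g Hg). lra.
Qed.

Lemma theta_n_triangle n x y z : theta_n n x z <= theta_n n x y + theta_n n y z.
Proof.
  cut (forall g1 g2, Gamma n x y g1 -> Gamma n y z g2 -> theta_n n x z <= Lrho g1 + Lrho g2).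
  - intros H. cut (theta_n n x z - theta_n n x y <= theta_n n y z); [lra|].
    apply theta_n_ge. intros g2 H2. cut (theta_n n x z - Lrho g2 <= theta_n n x y); [lra|].
    apply theta_n_ge. intros g1 H1. specialize (H g1 g2 H1 H2). lra.
  - intros g1 g2 H1 H2. destruct (Gamma_concat n x y z g1 g2 H1 H2) as [g [Hg HL]].
    pose proof (theta_n_le n x z g Hg). lra.
Qed.

Lemma theta_n_sym n x y : theta_n n x y = theta_n n y x.
Proof.
  cut (forall x y, theta_n n y x <= theta_n n x y); [intros H; apply Rle_antisym; apply H|].
  intros x' y'. apply theta_n_ge. intros g Hg. rewrite <- Lrho_rev. apply theta_n_le, Gamma_rev, Hg.
Qed.

Lemma theta_n_self n x : theta_n n x x <= ep ^ n.
Proof.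
  destruct (net_vertex n x) as (u & Hu & Hsu & Hx).
  assert (Hg : Gamma n x x [u])
    by (apply Gamma_walk; exists u, u; repeat split; auto; now apply walk_single).
  pose proof (theta_n_le n x x [u] Hg). pose proof (pi_le_ep_pow u Hu).
  unfold Lrho in *; simpl in *. rewrite Hsu in *. lra.
Qed.

(* [theta_n] is bounded, so the upper limit is finite and [real] loses nothing. *)
Definition theta (x y : X) : R := real (LimSup_seq (fun n => theta_n n x y)).

Lemma theta_nonneg x y : 0 <= theta x y.
Proof.
  apply (LimSup_seq_ge_eventually _ (2 / (1 - ep)) (fun n => theta_n_bounds n x y)).
  exists 0%nat. intros n _. apply theta_n_bounds.
Qed.

Lemma theta_self x : theta x x = 0.
Proof.
  apply Rle_antisym; [|apply theta_nonneg]. apply Rle_plus_epsilon. intros eps He.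
  destruct (pow_eventually_lt ep eps ltac:(lra) He) as [N HN].
  apply (LimSup_seq_le_eventually _ (2 / (1 - ep)) (fun n => theta_n_bounds n x x)).
  exists N. intros n Hn. pose proof (theta_n_self n x).
  pose proof (pow_le_pow_contravar ep N n ltac:(lra) Hn). lra.
Qed.

Lemma theta_sym x y : theta x y = theta y x.
Proof. unfold theta. f_equal. apply LimSup_seq_ext. intros n. apply theta_n_sym. Qed.

Lemma theta_triangle x y z : theta x z <= theta x y + theta y z.
Proof.
  apply (LimSup_seq_subadditive _ _ _ (2 / (1 - ep))); intros n; [apply theta_n_bounds..|].
  apply theta_n_triangle.
Qed.

Lemma Xn_finite n : exists L : list X, forall z, Xn n z -> In z L.
Proof.
  pose proof (apow_pos n).
  destruct (halvings_below 1 (apow a n / 2)) as [k Hk]; [lra|lra|].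
  destruct (separated_ball_list d_metric Nd d_doubling (Xn n) (apow a n) x0 1 k (Xn_separated n))
    as [L [_ HL]]; [lra|exact Hk|].
  exists L. intros z Hz. apply HL; [exact Hz|]. pose proof (d_le_half x0 z). lra.
Qed.

Lemma top_level_exists x y : x <> y -> exists n, top_level d a Xn x y n.
Proof.
  intros Hxy. pose proof (metric_pos d_metric x y Hxy) as Hdxy.
  destruct (INR_unbounded (4 / d x y)) as [B HB].
  destruct (nat_pred_max (fun n => exists z, inSv (z, n) /\ both_in d a x y (z, n)) B)
    as [n [Hn Hmax]].
  - exists 0%nat, x0. split; [exact root_inS|]. unfold both_in, mball; simpl. rewrite apow_O.
    pose proof (d_le_half x0 x). pose proof (d_le_half x0 y). lra.
  - intros n [z [_ [Hzx Hzy]]]. unfold mball in Hzx, Hzy. simpl in Hzx, Hzy.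
    pose proof (d_tri x z y) as Htri. rewrite (d_sym x z) in Htri.
    assert (Han : INR n <= a ^ n) by (apply (Rle_trans _ _ _ (INR_le_pow2 n)), pow_incr; lra).
    assert (Hpos : 0 < a ^ n) by (apply pow_lt; lra).
    assert (Hlt : d x y * a ^ n < 4).
    { replace 4 with (4 * apow a n * a ^ n) by (unfold apow; field; lra).
      apply Rmult_lt_compat_r; lra. }
    apply Nat.nlt_ge. intros HBn. apply lt_INR in HBn.
    assert (4 / d x y * d x y = 4) by (field; lra). nra.
  - exists n. split; [exact Hn|]. intros [z m] Hw Hb. apply Hmax. now exists z.
Qed.

Lemma top_level_unique x y n m : top_level d a Xn x y n -> top_level d a Xn x y m -> n = m.
Proof.
  intros [[z [Hz Hb]] Hn] [[z' [Hz' Hb']] Hm].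
  pose proof (Hn _ Hz' Hb'). pose proof (Hm _ Hz Hb). simpl in *. lia.
Qed.

Lemma in_c_exists x y : x <> y -> exists w, in_c d a Xn x y w.
Proof.
  intros Hxy. destruct (top_level_exists x y Hxy) as [n Hn].
  destruct (proj1 Hn) as [z [Hz Hb]]. now exists (z, n).
Qed.

Lemma in_c_dist_upper x y w : in_c d a Xn x y w -> d x y < 4 * apow a (snd w).
Proof.
  intros (_ & _ & Hx & Hy). unfold mball in Hx, Hy.
  pose proof (d_tri x (fst w) y). rewrite (d_sym x (fst w)) in *. lra.
Qed.

Lemma in_c_dist_lower x y w : in_c d a Xn x y w -> apow a (S (snd w)) < d x y.
Proof.
  intros (_ & [_ Htop] & _). destruct (Xn_net (S (snd w)) x) as [z [Hz Hzx]].
  destruct (Rlt_or_le (d z y) (2 * apow a (S (snd w)))) as [Hzy|Hzy].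
  - exfalso. assert (H : (S (snd w) <= snd w)%nat); [|lia].
    apply (Htop (z, S (snd w)) Hz). unfold both_in, mball; simpl.
    pose proof (apow_pos (S (snd w))). split; lra.
  - pose proof (d_tri z x y). lra.
Qed.

Lemma pi_c_ge x y w : x <> y -> in_c d a Xn x y w -> pi w <= pi_c d a Xn par rho x y.
Proof.
  intros Hxy Hw.
  assert (Hmax : exists m, is_max_of (fun r => exists w, in_c d a Xn x y w /\ r = pi w) m).
  { destruct (Xn_finite (snd w)) as [L HL].
    destruct (finite_pred_argmax pi (map (fun z => (z, snd w)) L) (in_c d a Xn x y))
      as [w0 [Hw0 Hmax]]; [|now exists w|].
    - intros [z m] (Hzm & Htop & _). apply in_map_iff. exists z.
      pose proof (top_level_unique x y m (snd w) Htop (proj1 (proj2 Hw))). subst m.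
      split; [reflexivity|now apply HL].
    - exists (pi w0). split; [now exists w0|]. intros r [w' [Hw' ->]]. now apply Hmax. }
  destruct (epsilon_spec (inhabits 0) _ Hmax) as [_ H]. apply H. now exists w.
Qed.

Lemma theta_n_upper x y w n : in_c d a Xn x y w -> (snd w <= n)%nat ->
  theta_n n x y <= 2 * K0 / (1 - ep) * pi w.
Proof.
  intros (HwS & _ & Hwx & Hwy) Hn. unfold mball in Hwx, Hwy.
  set (m := snd w) in *. set (k := (n - m)%nat).
  assert (Hnear : forall v z, inSv v -> snd v = n -> Bv d a v z -> d (fst w) z < 2 * apow a m ->
    inSv (anc par v k) /\ snd (anc par v k) = m /\
    d (fst (anc par v k)) (fst w) < lam * apow a (snd (anc par v k))).
  { intros v z Hv Hsv Hvz Hwz. unfold Bv, mball in Hvz. rewrite Hsv in Hvz.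
    assert (Hs : snd (anc par v k) = m) by (rewrite snd_anc; unfold k; lia).
    split; [apply inS_anc, Hv|split; [exact Hs|rewrite Hs]].
    pose proof (anc_dist k m v Hv ltac:(unfold k; lia)).
    pose proof (apow_le_contravar m n Hn).
    pose proof (d_tri (fst (anc par v k)) (fst v) (fst w)). pose proof (d_tri (fst v) z (fst w)).
    rewrite (d_sym (fst (anc par v k)) (fst v)), (d_sym z (fst w)) in *.
    assert (5 * apow a m <= lam * apow a m)
      by (apply Rmult_le_compat_r; [apply Rlt_le, apow_pos|lra]).
    pose proof (apow_pos m). lra. }
  destruct (net_vertex n x) as (u & Hu & Hsu & Hux).
  destruct (net_vertex n y) as (u' & Hu' & Hsu' & Hu'y).
  destruct (Hnear u x Hu Hsu Hux Hwx) as (HA & sA & dA).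
  destruct (Hnear u' y Hu' Hsu' Hu'y Hwy) as (HA' & sA' & dA').
  destruct (Gamma_via n x y u u' k Hu Hu' Hsu Hsu' Hux Hu'y ltac:(unfold k; lia)) as [g [Hg HL]].
  { destruct (classic (anc par u k = anc par u' k)) as [E|NE]; [now left|right; right; right].
    repeat split; [assumption|assumption|congruence|exact NE|].
    exists (fst w). split; assumption. }
  pose proof (theta_n_le n x y g Hg).
  pose proof (pi_le_close _ w HA HwS sA dA). pose proof (pi_le_close _ w HA' HwS sA' dA').
  apply (Rle_trans _ _ _ H), (Rle_trans _ _ _ HL).
  replace (2 * K0 / (1 - ep) * pi w) with ((K0 * pi w + K0 * pi w) / (1 - ep)) by (field; lra).
  unfold Rdiv. apply Rmult_le_compat_r; [apply Rlt_le, Rinv_0_lt_compat; lra|lra].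
Qed.

Lemma theta_upper x y w : in_c d a Xn x y w -> theta x y <= 2 * K0 / (1 - ep) * pi w.
Proof.
  intros Hw. apply (LimSup_seq_le_eventually _ (2 / (1 - ep)) (fun n => theta_n_bounds n x y)).
  exists (snd w). intros n Hn. now apply theta_n_upper.
Qed.

Lemma theta_lower x y w : x <> y -> in_c d a Xn x y w -> pi w / K1 <= theta x y.
Proof.
  intros Hxy Hw. destruct (pi_c_paths x y Hxy) as [n0 [_ Hpaths]].
  apply (LimSup_seq_ge_eventually _ (2 / (1 - ep)) (fun n => theta_n_bounds n x y)).
  exists n0. intros n Hn. apply theta_n_ge. intros g Hg.
  apply Rle_trans with (/ K1 * pi_c d a Xn par rho x y); [|exact (Hpaths n g Hn Hg)].
  rewrite Rmult_comm.
  apply Rmult_le_compat_r; [apply Rlt_le, Rinv_0_lt_compat; lra|now apply pi_c_ge].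
Qed.

Lemma theta_pos x y : x <> y -> 0 < theta x y.
Proof.
  intros Hxy. destruct (in_c_exists x y Hxy) as [w Hw].
  pose proof (theta_lower x y w Hxy Hw). pose proof (pi_pos w (proj1 Hw)).
  assert (0 < pi w / K1) by (apply Rdiv_lt_0_compat; lra). lra.
Qed.

Lemma theta_metric : is_metric theta.
Proof.
  split; [exact theta_nonneg|split; [|split; [exact theta_sym|exact theta_triangle]]].
  intros x y. split; [|intros ->; apply theta_self].
  intros H0. apply NNPP. intros Hxy. pose proof (theta_pos x y Hxy). lra.
Qed.

Lemma dist_lt_pred_level u v n : d u v < 21 * apow a n -> d u v < 18 / 5 * apow a (pred n).
Proof.
  intros H. destruct n as [|n]; simpl pred.
  - rewrite apow_O. pose proof (d_le_half u v). lra.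
  - pose proof (apow_S_le n). pose proof (apow_pos n). lra.
Qed.

(** * Quasisymmetry *)

Definition qs_exponent : R := 1 + ln a / (- ln ep) + (- ln em) / ln a.

Lemma ln_a_pos : 0 < ln a.
Proof. rewrite <- ln_1. apply ln_increasing; lra. Qed.

Lemma ln_ep_neg : ln ep < 0.
Proof. rewrite <- ln_1. apply ln_increasing; lra. Qed.

Lemma ln_em_neg : ln em < 0.
Proof. rewrite <- ln_1. apply ln_increasing; lra. Qed.

Lemma qs_exponent_ge_1 : 1 <= qs_exponent.
Proof.
  unfold qs_exponent. pose proof ln_a_pos. pose proof ln_ep_neg. pose proof ln_em_neg.
  assert (0 <= ln a / - ln ep) by (apply Rlt_le, Rdiv_lt_0_compat; lra).
  assert (0 <= - ln em / ln a) by (apply Rlt_le, Rdiv_lt_0_compat; lra).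
  lra.
Qed.

(* The exponent is chosen so that [ep <= a^(-1/alpha)] and [1/em <= a^alpha]. *)
Lemma ep_le_Rpower : ep <= Rpower (/ a) (/ qs_exponent).
Proof.
  pose proof ln_a_pos. pose proof ln_ep_neg. pose proof ln_em_neg. pose proof qs_exponent_ge_1.
  assert (Hkey : ln a <= qs_exponent * - ln ep).
  { unfold qs_exponent. assert (ln a / - ln ep * - ln ep = ln a) by (field; lra).
    assert (0 <= - ln em / ln a * - ln ep)
      by (apply Rmult_le_pos; [apply Rlt_le, Rdiv_lt_0_compat|]; lra).
    rewrite !Rmult_plus_distr_r. lra. }
  unfold Rpower. rewrite ln_Rinv by lra. rewrite <- (exp_ln ep) at 1 by lra.
  apply exp_le_compat, (Rmult_le_reg_l qs_exponent); [lra|].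
  rewrite <- Rmult_assoc, Rinv_r, Rmult_1_l by lra. lra.
Qed.

Lemma inv_em_le_Rpower : / em <= Rpower a qs_exponent.
Proof.
  pose proof ln_a_pos. pose proof ln_ep_neg. pose proof ln_em_neg.
  assert (Hkey : - ln em <= qs_exponent * ln a).
  { unfold qs_exponent. assert (- ln em / ln a * ln a = - ln em) by (field; lra).
    assert (0 <= ln a / - ln ep * ln a)
      by (apply Rmult_le_pos; [apply Rlt_le, Rdiv_lt_0_compat|]; lra).
    rewrite !Rmult_plus_distr_r. lra. }
  unfold Rpower. rewrite <- (exp_ln (/ em)), ln_Rinv by (try apply Rinv_0_lt_compat; lra).
  now apply exp_le_compat.
Qed.

Lemma theta_const_ge_1 : 1 <= 2 * K0 / (1 - ep).
Proof. apply (Rmult_le_reg_r (1 - ep)); [lra|]. unfold Rdiv. rewrite Rmult_assoc, Rinv_l; lra. Qed.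

Lemma qs_prefactor_ge_1 : 1 <= 2 * K0 / (1 - ep) * K1 * (K0 / em).
Proof.
  pose proof theta_const_ge_1.
  assert (1 <= K0 / em).
  { apply (Rmult_le_reg_r em); [lra|]. unfold Rdiv. rewrite Rmult_assoc, Rinv_l; lra. }
  assert (1 <= 2 * K0 / (1 - ep) * K1) by nra.
  nra.
Qed.

Lemma pi_compare_in_c x y z wy wz : in_c d a Xn x y wy -> in_c d a Xn x z wz ->
  em ^ S (snd wz - snd wy) * pi wy <= K0 * ep ^ (snd wy - snd wz) * pi wz.
Proof.
  intros Hwy Hwz. destruct Hwy as (Hy & _ & Hyx & _), Hwz as (Hz & _ & Hzx & _).
  unfold mball in Hyx, Hzx. set (j := pred (Nat.min (snd wy) (snd wz))).
  assert (Hdist : d (fst wy) (fst wz) < 18 / 5 * apow a j).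
  { apply dist_lt_pred_level. pose proof (d_tri (fst wy) x (fst wz)). rewrite (d_sym x (fst wz)) in *.
    pose proof (apow_le_contravar (Nat.min (snd wy) (snd wz)) (snd wy) ltac:(lia)).
    pose proof (apow_le_contravar (Nat.min (snd wy) (snd wz)) (snd wz) ltac:(lia)).
    pose proof (apow_pos (Nat.min (snd wy) (snd wz))). lra. }
  pose proof (pi_compare wy wz j Hy Hz ltac:(unfold j; lia) ltac:(unfold j; lia) Hdist).
  pose proof (pi_pos wy Hy). pose proof (pi_pos wz Hz).
  assert (em ^ S (snd wz - snd wy) <= em ^ (snd wz - j))
    by (apply pow_le_pow_contravar; [lra|unfold j; lia]).
  assert (ep ^ (snd wy - j) <= ep ^ (snd wy - snd wz))
    by (apply pow_le_pow_contravar; [lra|unfold j; lia]).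
  pose proof (pow_le ep (snd wy - j) ltac:(lra)).
  assert (em ^ S (snd wz - snd wy) * pi wy <= em ^ (snd wz - j) * pi wy)
    by (apply Rmult_le_compat_r; lra).
  assert (K0 * ep ^ (snd wy - j) * pi wz <= K0 * ep ^ (snd wy - snd wz) * pi wz)
    by (apply Rmult_le_compat_r; [lra|apply Rmult_le_compat_l; lra]).
  lra.
Qed.

Lemma theta_ratio_pow x y z wy wz : x <> z -> in_c d a Xn x y wy -> in_c d a Xn x z wz ->
  theta x y / theta x z <=
  2 * K0 / (1 - ep) * K1 * (K0 / em) * (ep ^ (snd wy - snd wz) * (/ em) ^ (snd wz - snd wy)).
Proof.
  intros Hxz Hwy Hwz. pose proof (theta_upper x y wy Hwy). pose proof (theta_lower x z wz Hxz Hwz).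
  pose proof (pi_compare_in_c x y z wy wz Hwy Hwz) as Hpi.
  pose proof (pi_pos wy (proj1 Hwy)). pose proof (pi_pos wz (proj1 Hwz)).
  pose proof (theta_nonneg x y).
  set (E := ep ^ (snd wy - snd wz) * (/ em) ^ (snd wz - snd wy)).
  assert (Hq : pi wy <= K0 / em * E * pi wz).
  { apply (Rmult_le_reg_l (em ^ S (snd wz - snd wy))); [apply pow_lt; lra|].
    replace (em ^ S (snd wz - snd wy) * (K0 / em * E * pi wz)) with (K0 * ep ^ (snd wy - snd wz) * pi wz)
      by (unfold E; rewrite pow_inv; simpl; field; split; [apply pow_nonzero|]; lra).
    exact Hpi. }
  assert (0 < pi wz / K1) by (apply Rdiv_lt_0_compat; lra).
  apply Rle_trans with (2 * K0 / (1 - ep) * pi wy / (pi wz / K1)).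
  - unfold Rdiv at 1 2. apply Rmult_le_compat; [lra|apply Rlt_le, Rinv_0_lt_compat; lra|lra|].
    apply Rinv_le_contravar; lra.
  - apply (Rmult_le_reg_r (pi wz / K1)); [lra|].
    replace (2 * K0 / (1 - ep) * pi wy / (pi wz / K1) * (pi wz / K1)) with (2 * K0 / (1 - ep) * pi wy)
      by (field; lra).
    replace (2 * K0 / (1 - ep) * K1 * (K0 / em) * E * (pi wz / K1))
      with (2 * K0 / (1 - ep) * (K0 / em * E * pi wz)) by (field; lra).
    apply Rmult_le_compat_l; [apply Rlt_le, Rdiv_lt_0_compat; lra|exact Hq].
Qed.

Lemma dist_ratio_in_c x y z wy wz : x <> z -> in_c d a Xn x y wy -> in_c d a Xn x z wz ->
  apow a (snd wy) <= 4 * a * (d x y / d x z) * apow a (snd wz).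
Proof.
  intros Hxz Hwy Hwz. pose proof (in_c_dist_lower x y wy Hwy).
  pose proof (in_c_dist_upper x z wz Hwz).
  pose proof (metric_pos d_metric x z Hxz). rewrite apow_S in *.
  replace (4 * a * (d x y / d x z) * apow a (snd wz)) with (a * (d x y * (4 * apow a (snd wz) / d x z)))
    by (field; lra).
  assert (1 <= 4 * apow a (snd wz) / d x z).
  { apply (Rmult_le_reg_r (d x z)); [lra|]. unfold Rdiv. rewrite Rmult_assoc, Rinv_l; lra. }
  assert (apow a (snd wy) / a * a = apow a (snd wy)) by (field; lra).
  pose proof (metric_nonneg d_metric x y).
  assert (apow a (snd wy) / a * a <= d x y * a) by (apply Rmult_le_compat_r; lra).
  assert (d x y * 1 <= d x y * (4 * apow a (snd wz) / d x z)) by (apply Rmult_le_compat_l; lra).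
  assert (a * (d x y * 1) <= a * (d x y * (4 * apow a (snd wz) / d x z)))
    by (apply Rmult_le_compat_l; lra).
  lra.
Qed.

Lemma ep_pow_le_Rpower k t : 0 < t -> (/ a) ^ k <= 4 * a * t ->
  ep ^ k <= 4 * a * Rpower t (/ qs_exponent).
Proof.
  intros Ht Hk. pose proof qs_exponent_ge_1.
  apply (Rle_trans _ _ _ (pow_le_Rpower_mul ep (/ a) (/ qs_exponent) k (4 * a) t
    ltac:(lra) ltac:(apply Rinv_0_lt_compat; lra) ltac:(apply Rlt_le, Rinv_0_lt_compat; lra)
    ltac:(lra) Ht ep_le_Rpower Hk)).
  apply Rmult_le_compat_r; [unfold Rpower; apply Rlt_le, exp_pos|].
  rewrite <- (Rpower_1 (4 * a)) at 2 by lra. apply Rle_Rpower; [lra|].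
  rewrite <- Rinv_1. apply Rinv_le_contravar; lra.
Qed.

Lemma inv_em_pow_le_Rpower k t : 0 < t -> a ^ k <= 4 * a * t ->
  (/ em) ^ k <= Rpower (4 * a) qs_exponent * Rpower t qs_exponent.
Proof.
  intros Ht Hk. pose proof qs_exponent_ge_1.
  apply (pow_le_Rpower_mul (/ em) a qs_exponent k (4 * a) t);
    [apply Rinv_0_lt_compat|..|exact inv_em_le_Rpower|exact Hk]; lra.
Qed.

Definition qs_constant : R :=
  2 * K0 / (1 - ep) * K1 * (K0 / em) * (4 * a) * Rpower (4 * a) qs_exponent.

Lemma in_c_dist_pos x y w : in_c d a Xn x y w -> 0 < d x y.
Proof. intros Hw. pose proof (in_c_dist_lower x y w Hw). pose proof (apow_pos (S (snd w))). lra.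
Qed.

Lemma theta_ratio_deep x y z wy wz : x <> z -> in_c d a Xn x y wy -> in_c d a Xn x z wz ->
  (snd wz <= snd wy)%nat ->
  theta x y / theta x z <= qs_constant * Rpower (d x y / d x z) (/ qs_exponent).
Proof.
  intros Hxz Hwy Hwz Hle. set (k := (snd wy - snd wz)%nat). set (t := d x y / d x z).
  assert (Ht : 0 < t)
    by (apply Rdiv_lt_0_compat; [exact (in_c_dist_pos x y wy Hwy)|exact (in_c_dist_pos x z wz Hwz)]).
  pose proof (theta_ratio_pow x y z wy wz Hxz Hwy Hwz) as Hth.
  replace (snd wz - snd wy)%nat with 0%nat in Hth by lia. fold k in Hth.
  rewrite pow_O, Rmult_1_r in Hth.
  assert (Hk : (/ a) ^ k <= 4 * a * t).
  { pose proof (dist_ratio_in_c x y z wy wz Hxz Hwy Hwz) as Hd. fold t in Hd.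
    replace (snd wy) with (snd wz + k)%nat in Hd by (unfold k; lia). rewrite apow_add in Hd.
    rewrite pow_inv. fold (apow a k). pose proof (apow_pos (snd wz)).
    apply (Rmult_le_reg_l (apow a (snd wz))); lra. }
  pose proof (ep_pow_le_Rpower k t Ht Hk). pose proof qs_prefactor_ge_1.
  assert (HP : 1 <= Rpower (4 * a) qs_exponent)
    by (apply Rpower_ge_1; [lra|pose proof qs_exponent_ge_1; lra]).
  assert (HR : 0 < Rpower t (/ qs_exponent)) by (unfold Rpower; apply exp_pos).
  apply (Rle_trans _ _ _ Hth). unfold qs_constant.
  set (M := 2 * K0 / (1 - ep) * K1 * (K0 / em)) in *.
  apply Rle_trans with (M * (4 * a) * 1 * Rpower t (/ qs_exponent)).
  { replace (M * (4 * a) * 1 * Rpower t (/ qs_exponent)) with (M * (4 * a * Rpower t (/ qs_exponent)))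
      by ring.
    apply Rmult_le_compat_l; lra. }
  apply Rmult_le_compat_r; [lra|]. apply Rmult_le_compat_l; [nra|exact HP].
Qed.

Lemma theta_ratio_shallow x y z wy wz : x <> z -> in_c d a Xn x y wy -> in_c d a Xn x z wz ->
  (snd wy < snd wz)%nat ->
  theta x y / theta x z <= qs_constant * Rpower (d x y / d x z) qs_exponent.
Proof.
  intros Hxz Hwy Hwz Hlt. set (k := (snd wz - snd wy)%nat). set (t := d x y / d x z).
  assert (Ht : 0 < t)
    by (apply Rdiv_lt_0_compat; [exact (in_c_dist_pos x y wy Hwy)|exact (in_c_dist_pos x z wz Hwz)]).
  pose proof (theta_ratio_pow x y z wy wz Hxz Hwy Hwz) as Hth.
  replace (snd wy - snd wz)%nat with 0%nat in Hth by lia. fold k in Hth.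
  rewrite pow_O, Rmult_1_l in Hth.
  assert (Hk : a ^ k <= 4 * a * t).
  { pose proof (dist_ratio_in_c x y z wy wz Hxz Hwy Hwz) as Hd. fold t in Hd.
    replace (snd wz) with (snd wy + k)%nat in Hd by (unfold k; lia). rewrite apow_add in Hd.
    pose proof (apow_pos (snd wy)). pose proof (apow_pos k). pose proof (pow_lt a k ltac:(lra)).
    assert (Hone : 1 <= 4 * a * t * apow a k) by (apply (Rmult_le_reg_l (apow a (snd wy))); lra).
    assert (Hak : apow a k * a ^ k = 1) by (unfold apow; field; apply pow_nonzero; lra).
    nra. }
  pose proof (inv_em_pow_le_Rpower k t Ht Hk). pose proof qs_prefactor_ge_1.
  assert (HR : 0 < Rpower t qs_exponent) by (unfold Rpower; apply exp_pos).
  assert (HP : 0 < Rpower (4 * a) qs_exponent) by (unfold Rpower; apply exp_pos).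
  apply (Rle_trans _ _ _ Hth). unfold qs_constant.
  set (M := 2 * K0 / (1 - ep) * K1 * (K0 / em)) in *.
  apply Rle_trans with (M * 1 * Rpower (4 * a) qs_exponent * Rpower t qs_exponent).
  { replace (M * 1 * Rpower (4 * a) qs_exponent * Rpower t qs_exponent)
      with (M * (Rpower (4 * a) qs_exponent * Rpower t qs_exponent)) by ring.
    apply Rmult_le_compat_l; lra. }
  apply Rmult_le_compat_r; [lra|]. apply Rmult_le_compat_r; [lra|]. apply Rmult_le_compat_l; lra.
Qed.

Lemma rpow_pos t s : 0 < t -> rpow t s = Rpower t s.
Proof. intros Ht. unfold rpow. destruct (Req_EM_T t 0); [lra|reflexivity]. Qed.

Lemma qs_constant_ge_1 : 1 <= qs_constant.
Proof.
  pose proof qs_exponent_ge_1. pose proof qs_prefactor_ge_1. unfold qs_constant.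
  assert (1 <= Rpower (4 * a) qs_exponent) by (apply Rpower_ge_1; lra).
  assert (1 <= 2 * K0 / (1 - ep) * K1 * (K0 / em) * (4 * a)) by nra.
  nra.
Qed.

Lemma theta_in_J : in_J d theta.
Proof.
  exists qs_constant, qs_exponent. pose proof qs_constant_ge_1.
  split; [assumption|split; [exact qs_exponent_ge_1|]]. intros x y z Hxz.
  destruct (classic (x = y)) as [<-|Hxy].
  { rewrite theta_self, d_self. unfold Rdiv. rewrite !Rmult_0_l. unfold etaf, rpow.
    destruct (Req_EM_T 0 0) as [_|]; [|congruence]. rewrite Rmax_left by lra. lra. }
  destruct (in_c_exists x y Hxy) as [wy Hwy]. destruct (in_c_exists x z Hxz) as [wz Hwz].
  assert (Ht : 0 < d x y / d x z)
    by (apply Rdiv_lt_0_compat; [exact (in_c_dist_pos x y wy Hwy)|exact (in_c_dist_pos x z wz Hwz)]).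
  unfold etaf. rewrite !rpow_pos by exact Ht.
  destruct (le_lt_dec (snd wz) (snd wy)) as [Hle|Hlt].
  - apply (Rle_trans _ _ _ (theta_ratio_deep x y z wy wz Hxz Hwy Hwz Hle)).
    apply Rmult_le_compat_l; [lra|apply Rmax_r].
  - apply (Rle_trans _ _ _ (theta_ratio_shallow x y z wy wz Hxz Hwy Hwz Hlt)).
    apply Rmult_le_compat_l; [lra|apply Rmax_l].
Qed.

(** * Assouad dimension *)

Definition heavy_at (x : X) (rad : R) (m : nat) : Prop :=
  exists q, inSv q /\ snd q = m /\ d (fst q) x < apow a m /\ rad <= pi q.

Lemma critical_level x rad : 0 < rad -> exists m, (m = 0%nat \/ heavy_at x rad m) /\
  exists q, inSv q /\ (snd q = m \/ snd q = S m) /\ d (fst q) x < apow a (snd q) /\ pi q < rad.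
Proof.
  intros HR. destruct (classic (heavy_at x rad 0)) as [H0|H0].
  - destruct (pow_eventually_lt ep rad ltac:(lra) HR) as [B HB].
    destruct (nat_pred_max (heavy_at x rad) B) as [m [Hm Hmax]]; [now exists 0%nat| |].
    + intros n (q & Hq & Hs & _ & Hpq). apply Nat.nlt_ge. intros Hlt.
      pose proof (pi_le_ep_pow q Hq). rewrite Hs in *.
      pose proof (pow_le_pow_contravar ep B n ltac:(lra) ltac:(lia)). lra.
    + exists m. split; [now right|]. destruct (net_vertex (S m) x) as (q & Hq & Hs & Hqx).
      unfold Bv, mball in Hqx. exists q. split; [exact Hq|split; [now right|split; [exact Hqx|]]].
      apply Rnot_le_lt. intros Hle. assert (H : (S m <= m)%nat); [|lia].
      apply Hmax. exists q. rewrite Hs in Hqx. tauto.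
  - exists 0%nat. split; [now left|]. exists (x0, 0%nat).
    assert (Hd : d x0 x < apow a 0) by (rewrite apow_O; pose proof (d_le_half x0 x); lra).
    split; [exact root_inS|split; [now left|split; [exact Hd|]]].
    apply Rnot_le_lt. intros Hle. apply H0. exists (x0, 0%nat). split; [exact root_inS|tauto].
Qed.

Lemma theta_small_dist x y rad m j0 : ep ^ j0 < / (K0 * K1) -> (m = 0%nat \/ heavy_at x rad m) ->
  theta x y < rad -> d x y < 4 * apow a (m - j0).
Proof.
  intros Hj0 Hm Hth. pose proof (apow_pos (m - j0)).
  destruct (classic (x = y)) as [<-|Hxy]; [rewrite d_self; lra|].
  destruct Hm as [->|(q & Hq & Hsq & Hqx & Hpq)].
  { simpl. rewrite apow_O. pose proof (d_le_half x y). lra. }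
  destruct (in_c_exists x y Hxy) as [w Hw].
  destruct (le_lt_dec (m - j0) (snd w)) as [Hle|Hlt].
  { pose proof (apow_le_contravar _ _ Hle). pose proof (in_c_dist_upper x y w Hw). lra. }
  exfalso. pose proof Hw as (HwS & _ & Hwx & _). unfold mball in Hwx.
  assert (Hdist : d (fst q) (fst w) < 18 / 5 * apow a (snd w)).
  { pose proof (d_tri (fst q) x (fst w)). rewrite (d_sym x (fst w)) in *.
    pose proof (apow_le_contravar (snd w) m ltac:(lia)). pose proof (apow_pos (snd w)). lra. }
  pose proof (pi_compare q w (snd w) Hq HwS ltac:(lia) ltac:(lia) Hdist) as Hc.
  rewrite Nat.sub_diag, pow_O, Rmult_1_l in Hc.
  pose proof (theta_lower x y w Hxy Hw). pose proof (pi_pos w HwS).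
  assert (Hpw : pi w < K1 * rad).
  { apply (Rmult_lt_reg_r (/ K1)); [apply Rinv_0_lt_compat; lra|].
    replace (K1 * rad * / K1) with rad by (field; lra). unfold Rdiv in *. lra. }
  assert (He : ep ^ (snd q - snd w) <= ep ^ j0) by (apply pow_le_pow_contravar; lra || lia).
  pose proof (pow_le ep (snd q - snd w) ltac:(lra)).
  assert (HKK : K0 * K1 * ep ^ j0 < 1).
  { apply (Rmult_lt_compat_l (K0 * K1)) in Hj0; [|nra]. rewrite Rinv_r in Hj0; nra. }
  assert (K0 * ep ^ (snd q - snd w) * pi w <= K0 * ep ^ j0 * pi w)
    by (apply Rmult_le_compat_r; [lra|apply Rmult_le_compat_l; lra]).
  assert (K0 * ep ^ j0 * pi w <= K0 * ep ^ j0 * (K1 * rad))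
    by (apply Rmult_le_compat_l; [pose proof (pow_le ep j0 ltac:(lra)); nra|lra]).
  assert (0 < rad) by (pose proof (theta_nonneg x y); lra).
  assert (K0 * K1 * ep ^ j0 * rad < 1 * rad) by (apply Rmult_lt_compat_r; lra).
  lra.
Qed.

Lemma pi_top_le t q j0 rad : inSv t -> inSv q -> (snd q = snd t \/ snd q = S (snd t)) ->
  d (fst t) (fst q) < 8 * apow a (snd t - j0) -> pi q < rad -> em ^ (j0 + 2) * pi t <= K0 * rad.
Proof.
  intros Ht Hq Hsq Hd Hpq. set (j := pred (snd t - j0)).
  assert (Hdj : d (fst t) (fst q) < 18 / 5 * apow a j)
    by (apply dist_lt_pred_level; pose proof (apow_pos (snd t - j0)); lra).
  pose proof (pi_compare t q j Ht Hq ltac:(unfold j; lia) ltac:(unfold j; lia) Hdj) as Hc.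
  pose proof (pi_pos t Ht). pose proof (pi_pos q Hq).
  assert (em ^ (j0 + 2) <= em ^ (snd q - j)) by (apply pow_le_pow_contravar; [lra|unfold j; lia]).
  assert (ep ^ (snd t - j) <= 1) by (apply pow_le_one; lra).
  pose proof (pow_le ep (snd t - j) ltac:(lra)).
  assert (em ^ (j0 + 2) * pi t <= em ^ (snd q - j) * pi t) by (apply Rmult_le_compat_r; lra).
  assert (K0 * ep ^ (snd t - j) * pi q <= K0 * 1 * pi q)
    by (apply Rmult_le_compat_r; [lra|apply Rmult_le_compat_l; lra]).
  assert (K0 * pi q <= K0 * rad) by (apply Rmult_le_compat_l; lra).
  lra.
Qed.

(* [s] is where the ancestral line from a deep vertex below [t] first drops under weight [r]. *)
Definition stopping (r : R) (t s : V X) : Prop :=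
  inSv s /\ pi s < r /\
  (s = t \/ ((snd t < snd s)%nat /\ anc par s (snd s - snd t) = t /\ r <= pi (parentV par s))).

Lemma stopping_ancestor r u k : inSv u -> (k <= snd u)%nat -> pi u < r ->
  exists i, (i <= k)%nat /\ stopping r (anc par u k) (anc par u i).
Proof.
  intros Hu Hk Hpu.
  destruct (nat_pred_max (fun i => (i <= k)%nat /\ pi (anc par u i) < r) k) as [i [[Hik Hpi] Hmax]];
    [exists 0%nat; split; [lia|exact Hpu]|intros n [Hn _]; exact Hn|].
  exists i. split; [exact Hik|]. split; [apply inS_anc, Hu|split; [exact Hpi|]].
  destruct (Nat.eq_dec i k) as [->|Hne]; [now left|right].
  rewrite !snd_anc. split; [lia|split].
  - rewrite anc_anc. f_equal. lia.
  - change (parentV par (anc par u i)) with (anc par u (S i)). apply Rnot_lt_le. intros Hlt.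
    assert (H : (S i <= i)%nat); [apply Hmax; split; [lia|exact Hlt]|lia].
Qed.

Lemma theta_le_pi_near v y : inSv v -> d (fst v) y < 3 * apow a (snd v) ->
  em * theta (fst v) y <= 2 * K0 / (1 - ep) * K0 * pi v.
Proof.
  intros Hv Hvy. pose proof (pi_pos v Hv).
  assert (HM : 0 < 2 * K0 / (1 - ep)) by (apply Rdiv_lt_0_compat; lra).
  destruct (classic (fst v = y)) as [<-|Hne].
  { rewrite theta_self, Rmult_0_r. apply Rmult_le_pos; [apply Rmult_le_pos|]; lra. }
  destruct (in_c_exists _ _ Hne) as [w Hw]. pose proof (in_c_dist_lower _ _ _ Hw).
  pose proof (theta_upper _ _ _ Hw). destruct Hw as (HwS & _ & Hwv & _). unfold mball in Hwv.
  assert (Hlev : (snd v <= S (snd w))%nat).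
  { apply Nat.nlt_ge. intros Hlt. pose proof (apow_le_contravar (S (S (snd w))) (snd v) Hlt).
    pose proof (apow_S_le (S (snd w))). pose proof (apow_pos (S (snd w))). lra. }
  set (j := pred (snd v)).
  assert (Hdist : d (fst w) (fst v) < 18 / 5 * apow a j).
  { pose proof (apow_le_contravar j (snd w) ltac:(unfold j; lia)). pose proof (apow_pos j). lra. }
  pose proof (pi_compare w v j HwS Hv ltac:(unfold j; lia) ltac:(unfold j; lia) Hdist) as Hc.
  pose proof (pi_pos w HwS).
  assert (em <= em ^ (snd v - j)).
  { destruct (snd v - j)%nat as [|[|n]] eqn:E; [simpl; lra|simpl; lra|unfold j in E; lia]. }
  assert (ep ^ (snd w - j) <= 1) by (apply pow_le_one; lra).
  pose proof (pow_le ep (snd w - j) ltac:(lra)).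
  assert (Hpw : em * pi w <= K0 * pi v).
  { assert (em * pi w <= em ^ (snd v - j) * pi w) by (apply Rmult_le_compat_r; lra).
    assert (K0 * ep ^ (snd w - j) * pi v <= K0 * 1 * pi v)
      by (apply Rmult_le_compat_r; [lra|apply Rmult_le_compat_l; lra]).
    lra. }
  apply Rle_trans with (2 * K0 / (1 - ep) * (em * pi w));
    [|rewrite Rmult_assoc; apply Rmult_le_compat_l; lra].
  replace (2 * K0 / (1 - ep) * (em * pi w)) with (em * (2 * K0 / (1 - ep) * pi w)) by ring.
  apply Rmult_le_compat_l; lra.
Qed.

Lemma stopping_exists x y rad m j0 r : 0 < r -> ep ^ j0 < / (K0 * K1) ->
  (m = 0%nat \/ heavy_at x rad m) -> theta x y < rad ->
  exists t s, inSv t /\ snd t = m /\ d (fst t) x < 7 * apow a (m - j0) /\ stopping r t s /\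
    em * theta (fst s) y <= 2 * K0 / (1 - ep) * K0 * pi s.
Proof.
  intros Hr Hj0 Hm Hth. pose proof (theta_small_dist x y rad m j0 Hj0 Hm Hth) as Hxy.
  destruct (pow_eventually_lt ep r ltac:(lra) Hr) as [N1 HN1]. set (N := Nat.max N1 m).
  destruct (net_vertex N y) as (u & Hu & Hsu & Huy). unfold Bv, mball in Huy. rewrite Hsu in Huy.
  assert (Hpu : pi u < r).
  { pose proof (pi_le_ep_pow u Hu). rewrite Hsu in *.
    pose proof (pow_le_pow_contravar ep N1 N ltac:(lra) ltac:(unfold N; lia)). lra. }
  destruct (stopping_ancestor r u (N - m) Hu ltac:(lia) Hpu) as [i [Hi Hstop]].
  pose proof (apow_le_contravar m N ltac:(unfold N; lia)).
  exists (anc par u (N - m)), (anc par u i).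
  split; [apply inS_anc, Hu|split; [rewrite snd_anc; unfold N in *; lia|split; [|split; [exact Hstop|]]]].
  - pose proof (anc_dist (N - m) m u Hu ltac:(unfold N in *; lia)).
    pose proof (d_tri (fst (anc par u (N - m))) (fst u) x). pose proof (d_tri (fst u) y x).
    rewrite (d_sym (fst (anc par u (N - m))) (fst u)), (d_sym y x) in *.
    pose proof (apow_le_contravar (m - j0) m ltac:(lia)). pose proof (apow_pos (m - j0)). lra.
  - apply theta_le_pi_near; [apply inS_anc, Hu|].
    assert (Hs : snd (anc par u i) = (N - i)%nat) by (rewrite snd_anc; lia).
    pose proof (anc_dist i (N - i) u Hu ltac:(lia)). rewrite Hs.
    pose proof (apow_le_contravar (N - i) N ltac:(lia)). pose proof (apow_pos (N - i)).
    pose proof (d_tri (fst (anc par u i)) (fst u) y).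
    rewrite (d_sym (fst (anc par u i)) (fst u)) in *.
    lra.
Qed.

Lemma stopping_depth r t s L : inSv t -> stopping r t s -> ep ^ L * pi t < r ->
  (snd s <= snd t + L)%nat.
Proof.
  intros Ht (Hs & _ & [->|(Hlt & Hanc & Hpar)]) HL; [lia|].
  apply Nat.nlt_ge. intros Hgt. set (k := (snd s - 1 - snd t)%nat).
  assert (Hp : inSv (parentV par s)) by (apply inS_parentV, Hs).
  destruct (pi_anc_bounds k (parentV par s) Hp ltac:(rewrite snd_parentV; unfold k; lia)) as [_ U].
  assert (E : anc par (parentV par s) k = t).
  { rewrite <- anc_S_r, <- Hanc. f_equal. unfold k. lia. }
  rewrite E in U. pose proof (pi_pos t Ht).
  assert (ep ^ k <= ep ^ L) by (apply pow_le_pow_contravar; [lra|unfold k; lia]).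
  assert (ep ^ k * pi t <= ep ^ L * pi t) by (apply Rmult_le_compat_r; lra).
  lra.
Qed.

(* The stopping vertices of one level are disjoint descendants, so (H4) bounds their number. *)
Lemma stopping_level_count r t k : 0 < r -> inSv t -> (snd t < k)%nat ->
  exists l : list X, INR (length l) <= Rpower (pi t / (em * r)) p /\
    forall s, stopping r t s -> snd s = k -> In (fst s) l.
Proof.
  intros Hr Ht Hk. destruct (Xn_finite k) as [E HE].
  destruct (nodup_select (fun z => stopping r t (z, k)) E) as [L [HN HL]].
  exists L. split.
  - set (ws := map (fun z => (z, k)) L).
    assert (Hws : NoDup ws)
      by (apply Injective_map_NoDup; [intros z z' E'; now injection E'|exact HN]).
    assert (Hst : forall w, In w ws -> stopping r t w /\ snd w = k).
    { intros w Hw. apply in_map_iff in Hw. destruct Hw as [z [<- Hz]]. apply HL in Hz. now split. }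
    assert (Hdesc : Forall (desc Xn par t k) ws).
    { apply Forall_forall. intros w Hw. destruct (Hst w Hw) as [(HwS & _ & [->|(Hlt & Ha & _)]) Hk'];
        [lia|]. split; [exact HwS|split; [exact Hk'|]]. exists (snd w - snd t)%nat.
        split; [lia|exact Ha]. }
    pose proof (descendant_packing t k Ht Hk ws Hws Hdesc) as Hsum.
    assert (Hlow : forall w, In w ws -> Rpower (em * r) p <= Rpower (pi w) p).
    { intros w Hw. destruct (Hst w Hw) as [(HwS & _ & [->|(Hlt & _ & Hpar)]) Hk']; [lia|].
      apply Rle_Rpower_l; [lra|split; [nra|]].
      rewrite (pi_parent w ltac:(lia)). destruct (rho_bounds w HwS).
      pose proof (pi_pos _ (inS_parentV w HwS)). nra. }
    pose proof (count_le_sum ws (fun w => Rpower (pi w) p) _ Hlow) as Hcount.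
    unfold ws in Hcount. rewrite length_map in Hcount. fold ws in Hcount.
    assert (Hpos : 0 < Rpower (em * r) p) by (unfold Rpower; apply exp_pos).
    rewrite Rpower_div by (first [exact (pi_pos t Ht)|nra]).
    apply (Rmult_le_reg_r (Rpower (em * r) p)); [exact Hpos|].
    unfold Rdiv. rewrite Rmult_assoc, Rinv_l, Rmult_1_r by lra.
    apply (Rle_trans _ _ _ Hcount). exact Hsum.
  - intros s Hs Hsk. apply HL. destruct s as [z k']. simpl in *. subst k'.
    split; [apply HE, (proj1 Hs)|exact Hs].
Qed.

Lemma stopping_cover r t L : 0 < r -> inSv t ->
  exists l : list X, INR (length l) <= 1 + INR L * Rpower (pi t / (em * r)) p /\
    forall s, stopping r t s -> (snd s <= snd t + L)%nat -> In (fst s) l.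
Proof.
  intros Hr Ht. induction L as [|L [l [Hl Hc]]].
  - exists [fst t]. split; [simpl; lra|]. intros s (_ & _ & [->|(Hlt & _)]) Hle; [now left|lia].
  - destruct (stopping_level_count r t (snd t + S L) Hr Ht ltac:(lia)) as [l2 [Hl2 Hc2]].
    exists (l ++ l2). split; [rewrite length_app, plus_INR, S_INR; lra|].
    intros s Hs Hle. apply in_or_app.
    destruct (Nat.eq_dec (snd s) (snd t + S L)) as [E|E];
      [right; now apply Hc2|left; apply Hc; [exact Hs|lia]].
Qed.

Lemma top_list m j0 kT x : 7 * a ^ j0 / 2 ^ kT <= 1 / 2 ->
  exists T : list X, (length T <= Nd ^ kT)%nat /\
    forall z, Xn m z -> d z x < 7 * apow a (m - j0) -> In z T.
Proof.
  intros HkT. pose proof (apow_pos m). pose proof (pow_lt a j0 ltac:(lra)).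
  destruct (separated_ball_list d_metric Nd d_doubling (Xn m) (apow a m) x (7 * a ^ j0 * apow a m) kT
    (Xn_separated m)) as [T [HTlen HT]]; [nra| |].
  { replace (7 * a ^ j0 * apow a m / 2 ^ kT) with (7 * a ^ j0 / 2 ^ kT * apow a m)
      by (field; apply pow_nonzero; lra). nra. }
  exists T. split; [exact HTlen|]. intros z Hz Hzx. apply HT; [exact Hz|].
  rewrite d_sym. pose proof (apow_sub_le m j0). lra.
Qed.

Lemma stopping_union r m L CT (Top : X -> Prop) (T : list X) : 0 < r ->
  (forall z, Top z -> inSv (z, m) /\ pi (z, m) <= CT) ->
  exists l : list X, INR (length l) <= INR (length T) * (1 + INR L * Rpower (CT / (em * r)) p) /\
    forall z s, In z T -> Top z -> stopping r (z, m) s -> (snd s <= m + L)%nat -> In (fst s) l.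
Proof.
  intros Hr HTop. set (Q := Rpower (CT / (em * r)) p).
  assert (HQ : 0 <= 1 + INR L * Q)
    by (pose proof (pos_INR L); unfold Q, Rpower; pose proof (exp_pos (p * ln (CT / (em * r)))); nra).
  destruct (list_union_bound T
    (fun z c => Top z /\ exists s, stopping r (z, m) s /\ (snd s <= m + L)%nat /\ fst s = c)
    (1 + INR L * Q) HQ) as [l [Hl Hc]].
  - intros z _.
  destruct (classic (Top z)) as [Hz|Hz];
    [|exists []; split; [simpl; lra|intros c [Hz' _]; contradiction]].
    destruct (HTop z Hz) as [HzS HzCT].
    destruct (stopping_cover r (z, m) L Hr HzS) as [l1 [Hl1 Hc1]]. exists l1. split.
    + apply (Rle_trans _ _ _ Hl1). apply Rplus_le_compat_l, Rmult_le_compat_l; [apply pos_INR|].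
      pose proof (pi_pos _ HzS).
      apply Rle_Rpower_l; [lra|split; [apply Rdiv_lt_0_compat; nra|]].
      unfold Rdiv. apply Rmult_le_compat_r; [apply Rlt_le, Rinv_0_lt_compat; nra|exact HzCT].
    + intros c [_ (s & Hs & Hle & <-)]. exact (Hc1 s Hs Hle).
  - exists l. split; [exact Hl|]. intros z s Hz Htop Hs Hle. apply (Hc z); [exact Hz|].
    split; [exact Htop|]. now exists s.
Qed.

Lemma theta_ball_cover j0 kT L x r rad rr :
  ep ^ j0 < / (K0 * K1) -> 7 * a ^ j0 / 2 ^ kT <= 1 / 2 ->
  0 < rr -> 2 * K0 / (1 - ep) * K0 * rr <= em * r -> 0 < rad ->
  ep ^ L * (K0 * rad / em ^ (j0 + 2)) < rr ->
  exists l : list X,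
    INR (length l) <= INR (Nd ^ kT) * (1 + INR L * Rpower (K0 * rad / em ^ (j0 + 2) / (em * rr)) p) /\
    forall y, theta x y < rad -> exists c, In c l /\ theta c y < r.
Proof.
  intros Hj0 HkT Hrr Hrr_r HR HL. set (CT := K0 * rad / em ^ (j0 + 2)) in *.
  destruct (critical_level x rad HR) as [m [Hm (q & Hq & Hsq & Hqx & Hpq)]].
  set (Top := fun z => Xn m z /\ d z x < 7 * apow a (m - j0)).
  assert (HTop : forall z, Top z -> inSv (z, m) /\ pi (z, m) <= CT).
  { intros z [Hz Hzx]. split; [exact Hz|].
    assert (Hdq : d (fst (z, m)) (fst q) < 8 * apow a (snd (z, m) - j0)).
    { simpl. pose proof (d_tri z x (fst q)). rewrite (d_sym x (fst q)) in *.
      pose proof (apow_le_contravar m (snd q) ltac:(lia)).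
      pose proof (apow_le_contravar (m - j0) m ltac:(lia)). lra. }
    pose proof (pi_top_le (z, m) q j0 rad Hz Hq Hsq Hdq Hpq).
    assert (Hemj : 0 < em ^ (j0 + 2)) by (apply pow_lt; lra).
    apply (Rmult_le_reg_l (em ^ (j0 + 2))); [exact Hemj|]. unfold CT.
    replace (em ^ (j0 + 2) * (K0 * rad / em ^ (j0 + 2))) with (K0 * rad) by (field; lra). assumption. }
  destruct (top_list m j0 kT x HkT) as [T [HTlen HT]].
  destruct (stopping_union rr m L CT Top T Hrr HTop) as [l [Hl Hc]].
  exists l. split.
  - apply (Rle_trans _ _ _ Hl). apply Rmult_le_compat_r; [|apply le_INR, HTlen].
    pose proof (pos_INR L). unfold Rpower. pose proof (exp_pos (p * ln (CT / (em * rr)))). nra.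
  - intros y Hy.
    destruct (stopping_exists x y rad m j0 rr Hrr Hj0 Hm Hy)
      as ([zt mt] & s & Ht & Hst & Htx & Hstop & Hth).
    simpl in Hst, Htx. subst mt. assert (Hz : Top zt) by (split; assumption).
    exists (fst s). split.
    + apply (Hc zt s (HT zt Ht Htx) Hz Hstop). apply (stopping_depth rr (zt, m) s L Ht Hstop).
      pose proof (proj2 (HTop zt Hz)). pose proof (pow_le ep L ltac:(lra)).
      assert (ep ^ L * pi (zt, m) <= ep ^ L * CT) by (apply Rmult_le_compat_l; lra). lra.
    + destruct Hstop as (HsS & Hps & _).
      assert (HM : 0 < 2 * K0 / (1 - ep) * K0)
        by (apply Rmult_lt_0_compat; [apply Rdiv_lt_0_compat|]; lra).
      assert (2 * K0 / (1 - ep) * K0 * pi s < 2 * K0 / (1 - ep) * K0 * rr)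
        by (apply Rmult_lt_compat_l; lra).
      apply (Rmult_lt_reg_l em); [exact em_pos|]. lra.
Qed.

Lemma cover_const_ge_1 j0 : 1 <= K0 / em ^ (j0 + 2) * (2 * K0 / (1 - ep) * K0) / em.
Proof.
  pose proof theta_const_ge_1. pose proof (pow_lt em (j0 + 2) em_pos).
  pose proof (pow_le_one em (j0 + 2) ltac:(lra)).
  assert (1 <= K0 / em ^ (j0 + 2)).
  { apply (Rmult_le_reg_r (em ^ (j0 + 2))); [lra|]. unfold Rdiv. rewrite Rmult_assoc, Rinv_l; nra. }
  assert (1 <= 2 * K0 / (1 - ep) * K0) by nra.
  assert (1 <= K0 / em ^ (j0 + 2) * (2 * K0 / (1 - ep) * K0)) by nra.
  assert (1 <= / em) by (rewrite <- Rinv_1; apply Rinv_le_contravar; lra).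
  unfold Rdiv at 3. nra.
Qed.

Lemma theta_assouad_admissible beta : p < beta -> assouad_adm theta beta.
Proof.
  intros Hb. split; [lra|].
  assert (HK : 0 < / (K0 * K1)) by (apply Rinv_0_lt_compat; nra).
  destruct (pow_eventually_lt ep _ ltac:(lra) HK) as [j0 Hj0].
  destruct (halvings_below (7 * a ^ j0) (1 / 2)) as [kT HkT]; [pose proof (pow_lt a j0); nra|lra|].
  set (M := 2 * K0 / (1 - ep) * K0).
  set (c := K0 / em ^ (j0 + 2) * M / em).
  assert (Hemj : 0 < em ^ (j0 + 2)) by (apply pow_lt; lra).
  assert (HM : 1 <= M) by (pose proof theta_const_ge_1; unfold M; nra).
  pose proof (cover_const_ge_1 j0) as Hc. fold M c in Hc.
  pose proof ln_ep_neg.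
  exists (INR (Nd ^ kT) * (1 + (1 + ln c / - ln ep + / ((beta - p) * - ln ep)) * Rpower (c / em) p)).
  intros x r rad Hr HrR. set (u := rad / r). set (rr := em * r / M).
  assert (Hu : 1 < u).
  { unfold u. apply (Rmult_lt_reg_r r); [lra|]. unfold Rdiv. rewrite Rmult_assoc, Rinv_l; lra. }
  assert (Hrr : 0 < rr) by (unfold rr; apply Rdiv_lt_0_compat; nra).
  assert (Hlncu : 0 < ln (c * u) / - ln ep).
  { apply Rdiv_lt_0_compat; [|lra]. rewrite <- ln_1. apply ln_increasing; nra. }
  destruct (nat_ceil _ Hlncu) as [L [HL1 HL2]].
  destruct (theta_ball_cover j0 kT L x r rad rr Hj0 HkT Hrr) as [l [Hl Hcov]].
  - fold M. unfold rr. right. field. lra.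
  - lra.
  - replace (ep ^ L * (K0 * rad / em ^ (j0 + 2))) with (ep ^ L * (c * u) * rr)
      by (unfold c, rr, u; field; repeat split; lra).
    rewrite <- (Rmult_1_l rr) at 2. apply Rmult_lt_compat_r; [exact Hrr|].
    apply pow_mul_lt_1; [lra|nra|exact HL1].
  - exists l. split; [|exact Hcov].
    apply (Rle_trans _ _ _ Hl).
    replace (K0 * rad / em ^ (j0 + 2) / (em * rr)) with (c / em * u)
      by (unfold c, rr, u; field; repeat split; lra).
    rewrite <- Rpower_mult_distr by (try apply Rdiv_lt_0_compat; lra).
    rewrite (Rmult_assoc (INR (Nd ^ kT))). apply Rmult_le_compat_l; [apply pos_INR|].
    replace (Rpower u beta) with (Rpower u (p + (beta - p))) by (f_equal; ring).
    apply log_times_power_le; [lra|lra|lra|lra|unfold Rpower; apply Rlt_le, exp_pos|lra|lra].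
Qed.

Lemma theta_conformal_gauge :
  exists theta, is_metric theta /\ in_J d theta /\ Rbar_le (assouad_dim theta) (Finite p).
Proof.
  exists theta. split; [exact theta_metric|split; [exact theta_in_J|]].
  apply assouad_dim_le. exact theta_assouad_admissible.
Qed.

End Filling.

Theorem theorem3p3 (X : Type) (d : X -> X -> R) (a lam : R)
    (Xn : nat -> X -> Prop) (x0 : X) (par : X -> nat -> X)
    (rho : V X -> R) (p : R) :
  is_metric d -> mcompact d -> doubling d -> diam_eq d (1 / 2) ->
  6 <= lam -> lam <= a ->
  hyperbolic_filling d a Xn x0 par ->
  (forall v, inS Xn v -> 0 < rho v /\ rho v < 1) ->
  H1 Xn rho ->
  H2 d a lam Xn par rho ->
  H3 d a lam Xn par rho ->
  0 < p -> H4 Xn par rho p ->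
  exists theta : X -> X -> R,
    is_metric theta /\ in_J d theta /\ Rbar_le (assouad_dim theta) (Finite p).
Proof.
  intros Hmet _ [Nd Hdbl] Hdiam Hlam Hla Hfill _ (em & ep & Hem & Hemep & Hep & Hrho)
    (K0 & HK0 & HH2) (K1 & HK1 & HH3) Hp HH4.
  assert (Hd : forall x y, d x y <= 1 / 2) by (intros x y; apply (proj1 Hdiam); now exists x, y).
  apply (theta_conformal_gauge X d a lam Xn x0 par rho p em ep K0 K1 Nd); assumption.
Qed.
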